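(* In the standing setting, suppose $F_*$ has negative curvature (with respect to $K^*$). Let $\mu>0$, $\beta\le\frac1{25}$, $y\in\mathcal N(\mu,\beta)$, and assume $\bar\alpha=\bar\alpha(y)<\infty$. Then for all $$\alpha\in\Big[0,\tfrac16\min\Big\{1,\tfrac1{\|v(y)\|_y}\Big\}\Big]$$ we have $\Gamma_\mu(y,\alpha)\le\frac16$, where $$\Gamma_\mu(y,\alpha)=\big(1+\alpha\,\sigma_{s(y)}(-A^*v(y))\big)\,\Big\|\nabla f(y+\alpha v(y))-\frac{\xi_{\bar\alpha}(\alpha)}{\mu}b\Big\|_y,\qquad \xi_{\bar\alpha}(\alpha)=1+\frac{\alpha\bar\alpha}{\bar\alpha-\alpha}.$$
   Context: Standing setting: $\mathbb E,\mathbb H$ finite-dimensional real spaces with duals, pairing $\langle\cdot,\cdot\rangle$; $K\subset\mathbb E$ a regular cone with dual cone $K^*$; $F$ a $\nu$-normal barrier for $K$ and $F_*(s)=\max_{x\in\operatorname{int}K}\{-\langle s,x\rangle-F(x)\}$ its dual barrier ($\nu$-normal for $K^*$). $A:\mathbb E\to\mathbb H^*$ linear, $c\in\mathbb E^*$, $b\in\mathbb H^*$; the problems $\min\{\langle c,x\rangle:Ax=b,x\in K\}$ and $\max\{\langle b,y\rangle:s+A^*y=c,s\in K^*\}$ are strictly feasible. $s(y)=c-A^*y$, $Q=\{y:s(y)\in K^*\}$, $f(y)=F_*(s(y))$, $v(y)=[\nabla^2f(y)]^{-1}\nabla f(y)$, $\bar\alpha(y)=\sup\{\alpha\ge0:y+\alpha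 v(y)\in Q\}$. For $y\in\operatorname{int}Q$: $\|u\|_y=\langle\nabla^2f(y)u,u\rangle^{1/2}$ ($u\in\mathbb H$), $\|g\|_y=\langle g,[\nabla^2f(y)]^{-1}g\rangle^{1/2}$ ($g\in\mathbb H^*$). $\mathcal N(\mu,\beta)=\{y\in\operatorname{int}Q:\|\nabla f(y)-\mu^{-1}b\|_y\le\beta\}$. For $s\in\operatorname{int}K^*$ and $h\in\mathbb E^*$, $\sigma_s(h)=\min\{\rho\ge0:\rho s-h\in K^*\}$. $F_*$ has negative curvature if $D^3F_*(s)[h,u,u]\le0$ for all $s\in\operatorname{int}K^*$, $h\in K^*$, $u\in\mathbb E^*$. *)

From Stdlib Require Import Reals ClassicalEpsilon.
From mathcomp Require Import ssreflect ssrfun ssrbool eqtype ssrnat seq fintype bigop.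

Set Implicit Arguments.
Unset Strict Implicit.

Open Scope R_scope.

(* Finite-dimensional spaces are identified with R^n via a basis; the dual
   space with R^n as well, the pairing being the dot product. *)
Definition vec (n : nat) := 'I_n -> R.
Definition mat (m n : nat) := 'I_m -> 'I_n -> R.

Definition vsum {n : nat} (F : 'I_n -> R) : R := \big[Rplus/R0]_(i < n) F i.
Definition dot {n : nat} (x y : vec n) : R := vsum (fun i => x i * y i).
Definition vzero {n : nat} : vec n := fun _ => R0.
Definition vadd {n : nat} (x y : vec n) : vec n := fun i => x i + y i.
Definition vsub {n : nat} (x y : vec n) : vec n := fun i => x i - y i.
Definition vopp {n : nat} (x : vec n) : vec n := fun i => - x i.
Definition vscale {n : nat} (t : R) (x : vec n) : vec n := fun i => t * x i.

Definition mv {m n : nat} (M : mat m n) (x : vec n) : vec m :=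
  fun i => vsum (fun j => M i j * x j).
Definition mtv {m n : nat} (M : mat m n) (y : vec m) : vec n :=
  fun j => vsum (fun i => M i j * y i).

Definition quad {n : nat} (M : mat n n) (u w : vec n) : R := dot (mv M u) w.
Definition cubic {n : nat} (T : 'I_n -> 'I_n -> 'I_n -> R) (h u w : vec n) : R :=
  vsum (fun i => vsum (fun j => vsum (fun k => T i j k * h i * u j * w k))).

(* ---------- topology (sup-norm balls; equivalent to any norm) ---------- *)
Definition vinterior {n : nat} (K : vec n -> Prop) (x : vec n) : Prop :=
  exists r, 0 < r /\ forall z : vec n, (forall i, Rabs (z i - x i) < r) -> K z.

Definition vconv {n : nat} (u : nat -> vec n) (x : vec n) : Prop :=
  forall i, Un_cv (fun k => u k i) (x i).

Definition vclosed {n : nat} (K : vec n -> Prop) : Prop :=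
  forall (u : nat -> vec n) x, (forall k, K (u k)) -> vconv u x -> K x.

Definition vcontinuous_on {n : nat} (D : vec n -> Prop) (f : vec n -> R) : Prop :=
  forall x, D x -> forall eps, 0 < eps -> exists delta, 0 < delta /\
    forall z, D z -> (forall i, Rabs (z i - x i) < delta) -> Rabs (f z - f x) < eps.

Definition is_cone {n : nat} (K : vec n -> Prop) : Prop :=
  forall x t, K x -> 0 <= t -> K (vscale t x).
Definition convex_set {n : nat} (K : vec n -> Prop) : Prop :=
  forall x y t, K x -> K y -> 0 <= t <= 1 -> K (vadd (vscale t x) (vscale (1 - t) y)).
Definition pointed {n : nat} (K : vec n -> Prop) : Prop :=
  forall x, K x -> K (vopp x) -> x = vzero.
Definition solid {n : nat} (K : vec n -> Prop) : Prop := exists x, vinterior K x.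

Definition regular_cone {n : nat} (K : vec n -> Prop) : Prop :=
  is_cone K /\ convex_set K /\ vclosed K /\ pointed K /\ solid K.

Definition dual_cone {n : nat} (K : vec n -> Prop) : vec n -> Prop :=
  fun s => forall x, K x -> 0 <= dot s x.

Definition has_grad {n : nat} (D : vec n -> Prop) (F : vec n -> R) (g : vec n -> vec n) : Prop :=
  forall x, D x -> forall h : vec n,
    derivable_pt_lim (fun t => F (vadd x (vscale t h))) 0 (dot (g x) h).

(* F is C^3 on D with gradient g, Hessian H (H x i j = d_j d_i F) and third
   derivative T (T x i j k = d_k d_j d_i F), T continuous. *)
Definition C3_on {n : nat} (D : vec n -> Prop) (F : vec n -> R) (g : vec n -> vec n)
  (H : vec n -> mat n n) (T : vec n -> 'I_n -> 'I_n -> 'I_n -> R) : Prop :=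
  has_grad D F g /\
  (forall i, has_grad D (fun x => g x i) (fun x j => H x i j)) /\
  (forall i j, has_grad D (fun x => H x i j) (fun x k => T x i j k)) /\
  (forall i j k, vcontinuous_on D (fun x => T x i j k)).

Definition normal_barrier {n : nat} (K : vec n -> Prop) (nu : R) (F : vec n -> R)
  (g : vec n -> vec n) (H : vec n -> mat n n) (T : vec n -> 'I_n -> 'I_n -> 'I_n -> R) : Prop :=
  C3_on (vinterior K) F g H T /\
  (forall x, vinterior K x -> forall h, 0 <= quad (H x) h h) /\
  (forall x, vinterior K x -> forall h,
      Rabs (cubic (T x) h h h) <= 2 * (quad (H x) h h * sqrt (quad (H x) h h))) /\
  (forall (u : nat -> vec n) x, (forall k, vinterior K (u k)) -> vconv u x ->
      ~ vinterior K x -> cv_infty (fun k => F (u k))) /\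
  (forall x, vinterior K x -> forall h, (dot (g x) h) ^ 2 <= nu * quad (H x) h h) /\
  (forall x t, vinterior K x -> 0 < t -> F (vscale t x) = F x - nu * ln t).

Definition is_dual_barrier {n : nat} (K : vec n -> Prop) (F Fs : vec n -> R) : Prop :=
  forall s, vinterior (dual_cone K) s ->
    (forall x, vinterior K x -> - dot s x - F x <= Fs s) /\
    (exists x, vinterior K x /\ Fs s = - dot s x - F x).

Definition negative_curvature {n : nat} (K : vec n -> Prop)
  (Ts : vec n -> 'I_n -> 'I_n -> 'I_n -> R) : Prop :=
  forall s, vinterior (dual_cone K) s -> forall h, dual_cone K h -> forall u,
    cubic (Ts s) h u u <= 0.

(* [M]^{-1} g : the solution u of M u = g (unique when M is invertible) *)
Definition solve {m : nat} (M : mat m m) (g : vec m) : vec m :=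
  epsilon (inhabits (@vzero m)) (fun u => mv M u = g).

Definition lnorm {m : nat} (Hy : mat m m) (u : vec m) : R := sqrt (quad Hy u u).
Definition dnorm {m : nat} (Hy : mat m m) (g : vec m) : R := sqrt (dot g (solve Hy g)).

Definition is_sigma {n : nat} (K : vec n -> Prop) (s h : vec n) (r : R) : Prop :=
  0 <= r /\ dual_cone K (vsub (vscale r s) h) /\
  forall r', 0 <= r' -> dual_cone K (vsub (vscale r' s) h) -> r <= r'.
Definition sigmaK {n : nat} (K : vec n -> Prop) (s h : vec n) : R :=
  epsilon (inhabits R0) (is_sigma K s h).

Definition xi (abar alpha : R) : R := 1 + alpha * abar / (abar - alpha).

(* The Newton direction [v = M^{-1} g] ([M], [g] the Hessian and gradient of [f] at [y]) moves
   the dual slack along the ray [s(y) + t q] with [q = -A^* v], and [||v||_y] is the local norm of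
   [q] at [s(y)].  Along this ray the Hessian of [F_*] is squeezed between [(1 + t sigma)^-2] and
   [(1 - t / abar)^-2] times the Hessian at [s(y)]: the ray point is a convex combination of
   [s(y)] and the boundary point [s(y) + abar q], and adding [t (sigma s(y) - q)], which lies in
   [K^*], turns it into [(1 + t sigma) s(y)].  Both comparisons use that negative curvature makes
   the Hessian of [F_*] decrease in the directions of [K^*], together with logarithmic
   homogeneity.  Polarizing the two-sided bound controls how the gradient of [F_*] changes along
   the ray; by the chain rule for [f = F_* o s] this bounds the new residual,
   [||r||_y <= ||v||_y (2 (xi - 1 - alpha) + alpha - alpha / (1 + alpha sigma)) + xi beta].
   The Dikin ellipsoid gives [sigma <= ||v||_y] and [1 / ||v||_y <= abar], and with
   [alpha ||v||_y <= 1/6] and [beta <= 1/25] the right-hand side times [1 + alpha sigma] is at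
   most [1/6]. *)

From Coquelicot Require Import Coquelicot.
From Stdlib Require Import Reals Lra ClassicalEpsilon FunctionalExtensionality Classical.
From mathcomp Require Import ssreflect ssrfun ssrbool eqtype ssrnat seq fintype bigop.
From HB Require Import structures.
From mathcomp Require ssralg matrix mxalgebra Rstruct.

Set Implicit Arguments.
Unset Strict Implicit.
Open Scope R_scope.

(* Lets the generic bigop theory act on [vsum], which iterates [Rplus]. *)
HB.instance Definition Rplus_comlaw :=
  Monoid.isComLaw.Build R 0 Rplus (fun a b c => esym (Rplus_assoc a b c)) Rplus_comm Rplus_0_l.

(** * Finite sums, dot products and quadratic forms *)

Lemma eq_vsum n (f g : 'I_n -> R) : (forall i, f i = g i) -> vsum f = vsum g.
Proof. by move=> H; apply: eq_bigr => i _. Qed.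

Lemma vsumD n (f g : 'I_n -> R) : vsum (fun i => f i + g i) = vsum f + vsum g.
Proof. exact: big_split. Qed.

Lemma vsumZ n (c : R) (f : 'I_n -> R) : vsum (fun i => c * f i) = c * vsum f.
Proof. by apply: (big_rec2 (fun x y => x = c * y)) => [|i x y _ ->]; ring. Qed.

Lemma vsumZr n (c : R) (f : 'I_n -> R) : vsum (fun i => f i * c) = vsum f * c.
Proof. by rewrite Rmult_comm -vsumZ; apply: eq_vsum => i; ring. Qed.

Lemma vsumN n (f : 'I_n -> R) : vsum (fun i => - f i) = - vsum f.
Proof. by apply: (big_rec2 (fun x y => x = - y)) => [|i x y _ ->]; ring. Qed.

Lemma vsumB n (f g : 'I_n -> R) : vsum (fun i => f i - g i) = vsum f - vsum g.
Proof. by rewrite /Rminus -vsumN -vsumD. Qed.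

Lemma vsum0 n : vsum (fun i : 'I_n => 0) = 0.
Proof. exact: big1. Qed.

Lemma exchange_vsum n m (F : 'I_n -> 'I_m -> R) :
  vsum (fun i => vsum (fun j => F i j)) = vsum (fun j => vsum (fun i => F i j)).
Proof. exact: exchange_big. Qed.

Lemma exchange_vsum3 n (G : 'I_n -> 'I_n -> 'I_n -> R) :
  vsum (fun i => vsum (fun j => vsum (fun k => G i j k))) =
  vsum (fun k => vsum (fun j => vsum (fun i => G i j k))).
Proof.
rewrite (eq_vsum (fun i => exchange_vsum (fun j k => G i j k))) exchange_vsum.
by apply: eq_vsum => k; rewrite exchange_vsum.
Qed.

Lemma ler_vsum n (f g : 'I_n -> R) : (forall i, f i <= g i) -> vsum f <= vsum g.
Proof.
move=> H; apply: (big_rec2 (fun x y => x <= y)) => [|i x y _ Hxy]; first lra.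
by have := H i; lra.
Qed.

Lemma vsum_ge0 n (f : 'I_n -> R) : (forall i, 0 <= f i) -> 0 <= vsum f.
Proof. by move=> H; rewrite -(vsum0 n); apply: ler_vsum. Qed.

Lemma ler_vsum_term n (f : 'I_n -> R) i : (forall j, 0 <= f j) -> f i <= vsum f.
Proof.
move=> H; rewrite /vsum (bigD1 i) //=.
match goal with |- _ <= Rplus _ ?S => suff : 0 <= S by lra end.
by apply: (big_rec (fun x => 0 <= x)) => [|j x _]; [lra | have := H j; lra].
Qed.

Lemma ler_abs_vsum n (x : 'I_n -> R) i : Rabs (x i) <= vsum (fun j => Rabs (x j)).
Proof. by apply: (ler_vsum_term (f := fun j => Rabs (x j))) => j; apply: Rabs_pos. Qed.

Lemma abs_vsum_le n (f : 'I_n -> R) : Rabs (vsum f) <= vsum (fun i => Rabs (f i)).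
Proof.
apply: Rabs_le; split; last by apply: ler_vsum => i; apply: Rle_abs.
by rewrite -vsumN; apply: ler_vsum => i; have := Rabs_maj2 (f i); lra.
Qed.

Lemma vext n (x y : vec n) : (forall i, x i = y i) -> x = y.
Proof. exact: functional_extensionality. Qed.

Definition evec n (a : 'I_n) : vec n := fun j => if j == a then 1 else 0.

Lemma evec_abs n (a : 'I_n) i : Rabs (evec a i) <= 1.
Proof. by rewrite /evec; case: (i == a); rewrite ?Rabs_R1 ?Rabs_R0; lra. Qed.

Lemma dot_evec n (x : vec n) a : dot x (evec a) = x a.
Proof.
rewrite /dot /vsum (bigD1 a) //= /evec eqxx big1 /=; first ring.
by move=> j /negbTE ->; ring.
Qed.

Lemma dot0r n (x : vec n) : dot x vzero = 0.
Proof. by rewrite -(vsum0 n); apply: eq_vsum => i; rewrite /vzero; ring. Qed.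

Lemma dotC n (x z : vec n) : dot x z = dot z x.
Proof. by apply: eq_vsum => i; ring. Qed.

Lemma dotDl n (x y z : vec n) : dot (vadd x y) z = dot x z + dot y z.
Proof. by rewrite /dot -vsumD; apply: eq_vsum => i; rewrite /vadd; ring. Qed.
Lemma dotDr n (x y z : vec n) : dot z (vadd x y) = dot z x + dot z y.
Proof. by rewrite /dot -vsumD; apply: eq_vsum => i; rewrite /vadd; ring. Qed.
Lemma dotBl n (x y z : vec n) : dot (vsub x y) z = dot x z - dot y z.
Proof. by rewrite /dot -vsumB; apply: eq_vsum => i; rewrite /vsub; ring. Qed.
Lemma dotBr n (x y z : vec n) : dot z (vsub x y) = dot z x - dot z y.
Proof. by rewrite /dot -vsumB; apply: eq_vsum => i; rewrite /vsub; ring. Qed.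
Lemma dotZl n a (x z : vec n) : dot (vscale a x) z = a * dot x z.
Proof. by rewrite /dot -vsumZ; apply: eq_vsum => i; rewrite /vscale; ring. Qed.
Lemma dotZr n a (x z : vec n) : dot z (vscale a x) = a * dot z x.
Proof. by rewrite /dot -vsumZ; apply: eq_vsum => i; rewrite /vscale; ring. Qed.
Lemma dotNl n (x z : vec n) : dot (vopp x) z = - dot x z.
Proof. by rewrite /dot -vsumN; apply: eq_vsum => i; rewrite /vopp; ring. Qed.
Lemma dotNr n (x z : vec n) : dot z (vopp x) = - dot z x.
Proof. by rewrite /dot -vsumN; apply: eq_vsum => i; rewrite /vopp; ring. Qed.

Lemma dot_self_eq0 n (h : vec n) : dot h h = 0 -> h = vzero.
Proof.
move=> H; apply: vext => i; rewrite /vzero.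
have : h i * h i <= 0 by rewrite -H; apply: (ler_vsum_term (f := fun j => h j * h j)) => j; nra.
nra.
Qed.

Lemma dot_mtv m n (A : mat m n) (w : vec m) (x : vec n) : dot (mtv A w) x = dot w (mv A x).
Proof.
rewrite /dot /mtv /mv (eq_vsum (fun j => esym (vsumZr (x j) (fun i => A i j * w i)))).
rewrite exchange_vsum; apply: eq_vsum => i; rewrite -vsumZ; apply: eq_vsum => j; ring.
Qed.

Lemma mvD m n (A : mat m n) x y : mv A (vadd x y) = vadd (mv A x) (mv A y).
Proof. by apply: vext => i; rewrite /mv /vadd -vsumD; apply: eq_vsum => j; ring. Qed.
Lemma mvZ m n (A : mat m n) a x : mv A (vscale a x) = vscale a (mv A x).
Proof. by apply: vext => i; rewrite /mv /vscale -vsumZ; apply: eq_vsum => j; ring. Qed.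
Lemma mvN m n (A : mat m n) x : mv A (vopp x) = vopp (mv A x).
Proof. by apply: vext => i; rewrite /mv /vopp -vsumN; apply: eq_vsum => j; ring. Qed.
Lemma mvB m n (A : mat m n) x y : mv A (vsub x y) = vsub (mv A x) (mv A y).
Proof. by apply: vext => i; rewrite /mv /vsub -vsumB; apply: eq_vsum => j; ring. Qed.
Lemma mtvD m n (A : mat m n) x y : mtv A (vadd x y) = vadd (mtv A x) (mtv A y).
Proof. by apply: vext => i; rewrite /mtv /vadd -vsumD; apply: eq_vsum => j; ring. Qed.
Lemma mtvB m n (A : mat m n) x y : mtv A (vsub x y) = vsub (mtv A x) (mtv A y).
Proof. by apply: vext => i; rewrite /mtv /vsub -vsumB; apply: eq_vsum => j; ring. Qed.
Lemma mtvZ m n (A : mat m n) a x : mtv A (vscale a x) = vscale a (mtv A x).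
Proof. by apply: vext => i; rewrite /mtv /vscale -vsumZ; apply: eq_vsum => j; ring. Qed.

Definition msym n (M : mat n n) := forall i j, M i j = M j i.

Lemma quadDl n (M : mat n n) p q r : quad M (vadd p q) r = quad M p r + quad M q r.
Proof. by rewrite /quad mvD dotDl. Qed.
Lemma quadDr n (M : mat n n) p q r : quad M r (vadd p q) = quad M r p + quad M r q.
Proof. by rewrite /quad dotDr. Qed.
Lemma quadBl n (M : mat n n) p q r : quad M (vsub p q) r = quad M p r - quad M q r.
Proof. by rewrite /quad mvB dotBl. Qed.
Lemma quadBr n (M : mat n n) p q r : quad M r (vsub p q) = quad M r p - quad M r q.
Proof. by rewrite /quad dotBr. Qed.
Lemma quadZl n (M : mat n n) a p r : quad M (vscale a p) r = a * quad M p r.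
Proof. by rewrite /quad mvZ dotZl. Qed.
Lemma quadZr n (M : mat n n) a p r : quad M r (vscale a p) = a * quad M r p.
Proof. by rewrite /quad dotZr. Qed.
Lemma quadNl n (M : mat n n) p r : quad M (vopp p) r = - quad M p r.
Proof. by rewrite /quad mvN dotNl. Qed.
Lemma quadNr n (M : mat n n) p r : quad M r (vopp p) = - quad M r p.
Proof. by rewrite /quad dotNr. Qed.

Lemma quad_evec n (M : mat n n) i j : quad M (evec j) (evec i) = M i j.
Proof. by rewrite /quad dot_evec /mv; apply: (dot_evec (M i) j). Qed.

Lemma quadC n (M : mat n n) p q : msym M -> quad M p q = quad M q p.
Proof.
move=> HM; rewrite /quad /dot /mv.
rewrite (eq_vsum (fun i => esym (vsumZr (q i) (fun j => M i j * p j)))).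
rewrite (eq_vsum (fun i => esym (vsumZr (p i) (fun j => M i j * q j)))) exchange_vsum.
by apply: eq_vsum => i; apply: eq_vsum => j; rewrite HM; ring.
Qed.

Lemma quad_scale_mat n (M : mat n n) k p q :
  quad (fun i j => k * M i j) p q = k * quad M p q.
Proof.
rewrite /quad /mv -dotZl; congr dot; apply: vext => i.
by rewrite /vscale -vsumZ; apply: eq_vsum => j; ring.
Qed.

Lemma quad_expandD n (M : mat n n) p q : msym M ->
  quad M (vadd p q) (vadd p q) = quad M p p + 2 * quad M p q + quad M q q.
Proof. by move=> HM; rewrite !quadDl !quadDr (quadC q p HM); ring. Qed.

Lemma quad_expandB n (M : mat n n) p q : msym M ->
  quad M (vsub p q) (vsub p q) = quad M p p - 2 * quad M p q + quad M q q.
Proof. by move=> HM; rewrite !quadBl !quadBr (quadC q p HM); ring. Qed.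

Lemma cubic_sym13 n (Tx : 'I_n -> 'I_n -> 'I_n -> R) a b c :
  (forall i j k, Tx i j k = Tx k j i) -> cubic Tx a b c = cubic Tx c b a.
Proof.
move=> HT; rewrite /cubic exchange_vsum3.
by apply: eq_vsum => k; apply: eq_vsum => j; apply: eq_vsum => i; rewrite HT; ring.
Qed.

Lemma vadd_scale0 n (x q : vec n) : vadd x (vscale 0 q) = x.
Proof. by apply: vext => i; rewrite /vadd /vscale; ring. Qed.

(** * Interior points and dual cones *)

Lemma vinterior_subset n (K : vec n -> Prop) x : vinterior K x -> K x.
Proof. by case=> r [Hr H]; apply: H => i; rewrite Rminus_diag Rabs_R0. Qed.

Lemma vinterior_open n (K : vec n -> Prop) x : vinterior K x ->
  exists r, 0 < r /\ forall z, (forall i, Rabs (z i - x i) < r) -> vinterior K z.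
Proof.
case=> r [Hr H]; exists (r / 2); split; first lra.
move=> z Hz; exists (r / 2); split; first lra.
move=> w Hw; apply: H => i; have := Hz i; have := Hw i.
have := Rabs_triang (w i - z i) (z i - x i).
by rewrite (_ : w i - z i + (z i - x i) = w i - x i); [lra | ring].
Qed.

Lemma vinterior_line n (K : vec n -> Prop) x h : vinterior K x ->
  exists eta, 0 < eta /\ forall t, Rabs t < eta -> vinterior K (vadd x (vscale t h)).
Proof.
case/vinterior_open=> r [Hr H].
set M := vsum (fun j => Rabs (h j)) + 1.
have HM : 0 < M by have := vsum_ge0 (fun j => Rabs_pos (h j)); rewrite /M; lra.
exists (r / M); split; first exact: Rdiv_lt_0_compat.
move=> t Ht; apply: H => i; rewrite /vadd /vscale Rplus_minus_l Rabs_mult.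
have Hhi : Rabs (h i) <= M by have := ler_abs_vsum h i; rewrite /M; lra.
have Ht' : Rabs t * M < r.
  by apply: (Rmult_lt_reg_r (/ M)); [exact: Rinv_0_lt_compat | field_simplify; lra].
by have := Rabs_pos t; have := Rabs_pos (h i); nra.
Qed.

Lemma dual_coneD n (K : vec n -> Prop) a b :
  dual_cone K a -> dual_cone K b -> dual_cone K (vadd a b).
Proof. by move=> Ha Hb x Hx; rewrite dotDl; have := Ha x Hx; have := Hb x Hx; lra. Qed.

Lemma dual_coneZ n (K : vec n -> Prop) t a : 0 <= t -> dual_cone K a -> dual_cone K (vscale t a).
Proof. by move=> Ht Ha x Hx; rewrite dotZl; have := Ha x Hx; nra. Qed.

Lemma vinterior_dualD n (K : vec n -> Prop) a b :
  vinterior (dual_cone K) a -> dual_cone K b -> vinterior (dual_cone K) (vadd a b).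
Proof.
case=> r [Hr H] Hb; exists r; split => // z Hz.
rewrite (_ : z = vadd (vsub z b) b); last by apply: vext => i; rewrite /vadd /vsub; ring.
apply: dual_coneD => //; apply: H => i; have := Hz i; rewrite /vsub /vadd.
by rewrite (_ : z i - b i - a i = z i - (a i + b i)); [| ring].
Qed.

Lemma is_cone_dual n (K : vec n -> Prop) : is_cone (dual_cone K).
Proof. by move=> x t Hx Ht; apply: dual_coneZ. Qed.

Lemma vinterior_coneZ n (C : vec n -> Prop) t x : is_cone C -> 0 < t ->
  vinterior C x -> vinterior C (vscale t x).
Proof.
move=> HC Ht [r [Hr H]]; exists (t * r); split; first nra.
move=> z Hz; rewrite (_ : z = vscale t (vscale (/ t) z)); last first.
  by apply: vext => i; rewrite /vscale -Rmult_assoc Rinv_r; lra.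
apply: HC; last lra; apply: H => i; have := Hz i; rewrite /vscale.
rewrite (_ : z i - t * x i = t * (/ t * z i - x i)); last by field; lra.
by rewrite Rabs_mult Rabs_pos_eq; [move=> H1; apply: (Rmult_lt_reg_l t) | lra].
Qed.

(** * Differentiation along lines and planes *)

Lemma derivable_pt_lim_shift (f : R -> R) t0 l :
  derivable_pt_lim (fun h => f (t0 + h)) 0 l -> derivable_pt_lim f t0 l.
Proof.
move=> H eps Heps; case: (H eps Heps) => del Hd; exists del => h hn hl.
by have := Hd h hn hl; rewrite Rplus_0_l Rplus_0_r.
Qed.

Lemma derivable_pt_lim_loc (f g : R -> R) t0 l eta : 0 < eta ->
  (forall t, Rabs (t - t0) < eta -> f t = g t) ->
  derivable_pt_lim f t0 l -> derivable_pt_lim g t0 l.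
Proof.
move=> He Hfg H eps Heps; case: (H eps Heps) => del Hd.
have Hm : 0 < Rmin del eta by apply: Rmin_pos; [exact: cond_pos | done].
exists (mkposreal _ Hm) => h hn hl /=.
rewrite -!Hfg; first (apply: Hd => //; apply: Rlt_le_trans hl _; apply: Rmin_l).
- by rewrite Rminus_diag Rabs_R0.
- by rewrite Rplus_minus_l; apply: Rlt_le_trans hl _; apply: Rmin_r.
Qed.

Lemma le_of_deriv_nonneg (f f' : R -> R) a b : a <= b ->
  (forall t, a <= t <= b -> derivable_pt_lim f t (f' t)) ->
  (forall t, a <= t <= b -> 0 <= f' t) -> f a <= f b.
Proof.
move=> Hab Hd Hpos; case: (Req_dec a b) => [->|Hne]; first lra.
case: (MVT_cor3 f f' a b ltac:(lra) (fun t H1 H2 => Hd t (conj H1 H2))) => c [H1 [H2 ->]].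
by have := Hpos c (conj H1 H2); nra.
Qed.

Lemma Un_cv_inv_INR_succ : Un_cv (fun k => / (INR k + 1)) 0.
Proof.
apply: cv_infty_cv_0 => M; case: (INR_unbounded M) => N HN.
by exists N => k /le_INR; lra.
Qed.

Lemma Un_cv_affine a b (w : nat -> R) : Un_cv w 0 -> Un_cv (fun k => a + b * w k) a.
Proof.
move=> Hw; have Hc : forall c, Un_cv (fun _ => c) c.
  by move=> c e He; exists 0%nat => k _; rewrite /Rdist Rminus_diag Rabs_R0.
by have := CV_plus _ _ _ _ (Hc a) (CV_mult _ _ _ _ (Hc b) Hw); rewrite Rmult_0_r Rplus_0_r.
Qed.

Lemma derivable_pt_lim_vsum n (f : 'I_n -> R -> R) (l : 'I_n -> R) t0 :
  (forall i, derivable_pt_lim (f i) t0 (l i)) ->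
  derivable_pt_lim (fun t => vsum (fun i => f i t)) t0 (vsum l).
Proof.
rewrite /vsum; elim: n f l => [|n IH] f l H.
  rewrite big_ord0; apply: (derivable_pt_lim_ext (fct_cte 0)); last exact: derivable_pt_lim_const.
  by move=> t; rewrite big_ord0.
rewrite big_ord_recr /=.
apply: (derivable_pt_lim_ext
  (fun t => \big[Rplus/0]_(i < n) f (widen_ord (leqnSn n) i) t + f ord_max t)).
  by move=> t; rewrite big_ord_recr.
by apply: derivable_pt_lim_plus; [apply: IH => i | ]; apply: H.
Qed.

Lemma derivable_pt_lim_dot n (f : 'I_n -> R -> R) (l : 'I_n -> R) (w : vec n) t0 :
  (forall i, derivable_pt_lim (f i) t0 (l i)) ->
  derivable_pt_lim (fun t => dot (fun i => f i t) w) t0 (dot l w).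
Proof.
move=> H; apply: derivable_pt_lim_vsum => i.
apply: (derivable_pt_lim_ext (fun t => w i * f i t)) => [t|]; first ring.
by rewrite Rmult_comm; apply: derivable_pt_lim_scal.
Qed.

Lemma has_grad_line n (D : vec n -> Prop) F g p q t0 :
  has_grad D F g -> D (vadd p (vscale t0 q)) ->
  derivable_pt_lim (fun t => F (vadd p (vscale t q))) t0 (dot (g (vadd p (vscale t0 q))) q).
Proof.
move=> Hg HD; apply: derivable_pt_lim_shift; have := Hg _ HD q.
suff -> : (fun h => F (vadd p (vscale (t0 + h) q))) =
          (fun h => F (vadd (vadd p (vscale t0 q)) (vscale h q))) by [].
by apply: functional_extensionality => h; congr F; apply: vext => i; rewrite /vadd /vscale; ring.
Qed.

Lemma Derive_of_derivable f x l : derivable_pt_lim f x l -> Derive f x = l.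
Proof. by move=> H; apply: is_derive_unique; apply/is_derive_Reals. Qed.

Lemma locally_abs_lt u r : Rabs u < r -> locally u (fun z => Rabs z < r).
Proof.
move=> Hu; have Hp : 0 < r - Rabs u by lra.
exists (mkposreal _ Hp) => z /= Hz; have := Rabs_triang_inv z u.
by move: Hz; rewrite /ball /= /AbsRing_ball /abs /minus /plus /opp /= /Rminus; lra.
Qed.

Lemma locally_2d_abs_lt (P : R -> R -> Prop) r : 0 < r ->
  (forall u v, Rabs u < r -> Rabs v < r -> P u v) -> locally_2d P 0 0.
Proof. by move=> Hr H; exists (mkposreal r Hr) => u v /=; rewrite !Rminus_0_r; apply: H. Qed.

(* Coquelicot's [Schwarz], with its [Derive]s replaced by [derivable_pt_lim] hypotheses. *)
Lemma schwarz_square (f Ga Gb Hab Hba : R -> R -> R) r : 0 < r ->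
  (forall u v, Rabs u < r -> Rabs v < r ->
     derivable_pt_lim (fun t => f t v) u (Ga u v) /\
     derivable_pt_lim (fun t => f u t) v (Gb u v) /\
     derivable_pt_lim (fun t => Gb t v) u (Hba u v) /\
     derivable_pt_lim (fun t => Ga u t) v (Hab u v)) ->
  continuity_2d_pt Hba 0 0 -> continuity_2d_pt Hab 0 0 -> Hba 0 0 = Hab 0 0.
Proof.
move=> Hr D CHba CHab; have Hr2 : 0 < r / 2 by lra.
have Ev : forall u v, Rabs u < r / 2 -> Rabs v < r ->
    locally u (fun z => Gb z v = Derive (fun t => f z t) v).
  move=> u v Hu Hv; apply: (filter_imp (fun z => Rabs z < r)); last by apply: locally_abs_lt; lra.
  by move=> z Hz; rewrite (Derive_of_derivable (proj1 (proj2 (D z v Hz Hv)))).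
have Eu : forall u v, Rabs u < r -> Rabs v < r / 2 ->
    locally v (fun z => Ga u z = Derive (fun t => f t z) u).
  move=> u v Hu Hv; apply: (filter_imp (fun z => Rabs z < r)); last by apply: locally_abs_lt; lra.
  by move=> z Hz; rewrite (Derive_of_derivable (proj1 (D u z Hu Hz))).
have Duv : forall u v, Rabs u < r / 2 -> Rabs v < r / 2 ->
    Derive (fun z => Derive (fun t => f z t) v) u = Hba u v /\
    Derive (fun z => Derive (fun t => f t z) u) v = Hab u v.
  move=> u v Hu Hv; have [_ [_ [H3 H4]]] := D u v ltac:(lra) ltac:(lra).
  rewrite -(Derive_ext_loc _ _ _ (Ev u v Hu ltac:(lra))).
  rewrite -(Derive_ext_loc _ _ _ (Eu u v ltac:(lra) Hv)).
  by split; apply: Derive_of_derivable.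
have := Schwarz f 0 0; rewrite !(proj1 (Duv 0 0 _ _)) ?(proj2 (Duv 0 0 _ _)) ?Rabs_R0 //.
apply.
- apply: (locally_2d_abs_lt Hr2) => u v Hu Hv.
  have [H1 [H2 [H3 H4]]] := D u v ltac:(lra) ltac:(lra).
  split; first by exists (Ga u v); apply/is_derive_Reals.
  split; first by exists (Gb u v); apply/is_derive_Reals.
  split; [apply: (ex_derive_ext_loc _ _ _ (Ev u v Hu ltac:(lra))); exists (Hba u v)
         | apply: (ex_derive_ext_loc _ _ _ (Eu u v ltac:(lra) Hv)); exists (Hab u v)];
  by apply/is_derive_Reals.
- apply: (continuity_2d_pt_ext_loc _ _ _ _ _ CHba); apply: (locally_2d_abs_lt Hr2) => u v Hu Hv.
  by rewrite (proj1 (Duv u v Hu Hv)).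
- apply: (continuity_2d_pt_ext_loc _ _ _ _ _ CHab); apply: (locally_2d_abs_lt Hr2) => u v Hu Hv.
  by rewrite (proj2 (Duv u v Hu Hv)).
Qed.

Lemma abs_sub_le_deriv_bound (f f' : R -> R) M u :
  (forall t, Rabs t <= Rabs u -> derivable_pt_lim f t (f' t) /\ Rabs (f' t) <= M) ->
  Rabs (f u - f 0) <= M * Rabs u.
Proof.
move=> H.
have Hbetw : forall c, Rmin 0 u <= c <= Rmax 0 u -> Rabs c <= Rabs u.
  by rewrite /Rmin /Rmax => c; case: Rle_dec => H1 H2; split_Rabs; lra.
case: (MVT_abs f f' 0 u) => [c /Hbetw /H [] //|c [-> /Hbetw /H [_ Hc]]].
by rewrite Rminus_0_r; apply: Rmult_le_compat_r => //; apply: Rabs_pos.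
Qed.

Lemma vcontinuous_bounded_near n (D : vec n -> Prop) phi x :
  vcontinuous_on D phi -> D x ->
  exists r, 0 < r /\ forall z, D z -> (forall i, Rabs (z i - x i) < r) ->
    Rabs (phi z) <= Rabs (phi x) + 1.
Proof.
move=> Hc Hx; case: (Hc x Hx 1 Rlt_0_1) => r [Hr H]; exists r; split => // z Hz Hzx.
by have := H z Hz Hzx; have := Rabs_triang_inv (phi z) (phi x); lra.
Qed.

Definition plane n (x : vec n) a b u v := vadd (vadd x (vscale u (evec a))) (vscale v (evec b)).

Lemma plane00 n (x : vec n) a b : plane x a b 0 0 = x.
Proof. by apply: vext => i; rewrite /plane /vadd /vscale; ring. Qed.

Lemma plane_dist n (x : vec n) a b u v i : Rabs (plane x a b u v i - x i) <= Rabs u + Rabs v.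
Proof.
rewrite /plane /vadd /vscale (_ : _ - x i = u * evec a i + v * evec b i); last ring.
apply: Rle_trans (Rabs_triang _ _) _; rewrite !Rabs_mult.
have := evec_abs a i; have := evec_abs b i; have := Rabs_pos u; have := Rabs_pos v.
by have := Rabs_pos (evec a i); have := Rabs_pos (evec b i); nra.
Qed.

Lemma vinterior_plane n (K : vec n -> Prop) x : vinterior K x ->
  exists r, 0 < r /\ forall a b u v, Rabs u < r -> Rabs v < r -> vinterior K (plane x a b u v).
Proof.
case/vinterior_open=> r [Hr H]; exists (r / 2); split; first lra.
by move=> a b u v Hu Hv; apply: H => i; have := plane_dist x a b u v i; lra.
Qed.

Section PlaneDerivatives.
Variables (n : nat) (D : vec n -> Prop) (phi : vec n -> R) (psi : vec n -> vec n).
Hypothesis Hgrad : has_grad D phi psi.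

Lemma plane_derivable_u x a b u v : D (plane x a b u v) ->
  derivable_pt_lim (fun t => phi (plane x a b t v)) u (psi (plane x a b u v) a).
Proof.
have E : forall t, plane x a b t v = vadd (plane x a b 0 v) (vscale t (evec a)).
  by move=> t; apply: vext => i; rewrite /plane /vadd /vscale; ring.
rewrite (functional_extensionality _ _ (fun t => congr1 phi (E t))) E -dot_evec.
exact: has_grad_line.
Qed.

Lemma plane_derivable_v x a b u v : D (plane x a b u v) ->
  derivable_pt_lim (fun t => phi (plane x a b u t)) v (psi (plane x a b u v) b).
Proof.
have E : forall t, plane x a b u t = vadd (plane x a b u 0) (vscale t (evec b)).
  by move=> t; apply: vext => i; rewrite /plane /vadd /vscale; ring.
rewrite (functional_extensionality _ _ (fun t => congr1 phi (E t))) E -dot_evec.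
exact: has_grad_line.
Qed.

End PlaneDerivatives.

Lemma continuity_2d_plane n (K : vec n -> Prop) (phi : vec n -> R) x a b :
  vcontinuous_on (vinterior K) phi -> vinterior K x ->
  continuity_2d_pt (fun u v => phi (plane x a b u v)) 0 0.
Proof.
move=> Hc Hx eps; case: (vinterior_plane Hx) => r [Hr Hb].
case: (Hc x Hx eps (cond_pos eps)) => d0 [Hd0 Hd].
apply: (locally_2d_abs_lt (r := Rmin d0 r / 2)) => [|u v Hu Hv].
  by apply: Rdiv_lt_0_compat; [apply: Rmin_pos|]; lra.
have := Rmin_l d0 r; have := Rmin_r d0 r => H1 H2.
rewrite plane00; apply: Hd; first by apply: Hb; lra.
by move=> i; have := plane_dist x a b u v i; lra.
Qed.

(* Mean value theorem on each coordinate segment, with the partial derivatives bounded near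
   [x] by their continuity. *)
Lemma plane_lipschitz n (K : vec n -> Prop) (phi : vec n -> R) psi x a b :
  has_grad (vinterior K) phi psi ->
  vcontinuous_on (vinterior K) (fun z => psi z a) ->
  vcontinuous_on (vinterior K) (fun z => psi z b) -> vinterior K x ->
  exists rho M, 0 < rho /\ 0 <= M /\ forall u v, Rabs u < rho -> Rabs v < rho ->
    Rabs (phi (plane x a b u v) - phi x) <= M * (Rabs u + Rabs v).
Proof.
move=> Hg Hca Hcb Hx; case: (vinterior_plane Hx) => r [Hr Hb].
case: (vcontinuous_bounded_near Hca Hx) => ra [Hra Ba].
case: (vcontinuous_bounded_near Hcb Hx) => rb [Hrb Bb].
set M := Rabs (psi x a) + Rabs (psi x b) + 1.
have HM : 0 <= M by rewrite /M; have := Rabs_pos (psi x a); have := Rabs_pos (psi x b); lra.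
have := Rmin_l r (Rmin ra rb); have := Rmin_r r (Rmin ra rb); have := Rmin_l ra rb.
have := Rmin_r ra rb; have := Rmin_pos r (Rmin ra rb) Hr (Rmin_pos ra rb Hra Hrb).
set rho := Rmin r (Rmin ra rb) => Hrho H1 H2 H3 H4.
exists (rho / 2), M; split; first lra; split=> // u v Hu Hv.
have Hin : forall u' v', Rabs u' <= Rabs u -> Rabs v' <= Rabs v ->
    vinterior K (plane x a b u' v') /\ forall i, Rabs (plane x a b u' v' i - x i) < Rmin ra rb.
  by move=> u' v' H5 H6; split; [apply: Hb | move=> i; have := plane_dist x a b u' v' i]; lra.
have Su : Rabs (phi (plane x a b u v) - phi (plane x a b 0 v)) <= M * Rabs u.
  apply: (abs_sub_le_deriv_bound (f := fun t => phi (plane x a b t v))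
    (f' := fun t => psi (plane x a b t v) a)) => t Ht.
  have [Hi Hd] := Hin t v Ht (Rle_refl _); split; first exact: (plane_derivable_u Hg).
  have := Ba _ Hi (fun i => Rlt_le_trans _ _ _ (Hd i) H2).
  by have := Rabs_pos (psi x b); rewrite /M; lra.
have Sv : Rabs (phi (plane x a b 0 v) - phi x) <= M * Rabs v.
  rewrite -{2}(plane00 x a b).
  apply: (abs_sub_le_deriv_bound (f := fun t => phi (plane x a b 0 t))
    (f' := fun t => psi (plane x a b 0 t) b)) => t Ht.
  have [Hi Hd] := Hin 0 t ltac:(rewrite Rabs_R0; apply: Rabs_pos) Ht.
  split; first exact: (plane_derivable_v Hg).
  have := Bb _ Hi (fun i => Rlt_le_trans _ _ _ (Hd i) H1).
  by have := Rabs_pos (psi x a); rewrite /M; lra.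
have := Rabs_triang (phi (plane x a b u v) - phi (plane x a b 0 v)) (phi (plane x a b 0 v) - phi x).
by rewrite (_ : _ + _ = phi (plane x a b u v) - phi x); [lra | ring].
Qed.

Lemma continuity_2d_plane_grad n (K : vec n -> Prop) (phi : vec n -> R) psi x a b :
  has_grad (vinterior K) phi psi ->
  vcontinuous_on (vinterior K) (fun z => psi z a) ->
  vcontinuous_on (vinterior K) (fun z => psi z b) -> vinterior K x ->
  continuity_2d_pt (fun u v => phi (plane x a b u v)) 0 0.
Proof.
move=> Hg Hca Hcb Hx eps; case: (plane_lipschitz Hg Hca Hcb Hx) => rho [M [Hrho [HM HL]]].
have He : 0 < eps / (2 * (M + 1)) by apply: Rdiv_lt_0_compat; [apply: cond_pos | lra].
apply: (locally_2d_abs_lt (Rmin_pos _ _ Hrho He)) => u v Hu Hv; rewrite plane00.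
have := Rmin_l rho (eps / (2 * (M + 1))); have := Rmin_r rho (eps / (2 * (M + 1))) => H1 H2.
apply: Rle_lt_trans (HL u v ltac:(lra) ltac:(lra)) _.
have HuvE : Rabs u + Rabs v < 2 * (eps / (2 * (M + 1))) by lra.
have : (M + 1) * (2 * (eps / (2 * (M + 1)))) = eps by field; lra.
by have := Rabs_pos u; have := Rabs_pos v; nra.
Qed.

Lemma has_grad2_sym n (K : vec n -> Prop) (Phi : vec n -> R) (G : vec n -> vec n)
    (Hm : vec n -> mat n n) x a b :
  has_grad (vinterior K) Phi G ->
  (forall i, has_grad (vinterior K) (fun z => G z i) (fun z j => Hm z i j)) ->
  vinterior K x ->
  continuity_2d_pt (fun u v => Hm (plane x a b u v) b a) 0 0 ->
  continuity_2d_pt (fun u v => Hm (plane x a b u v) a b) 0 0 ->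
  Hm x b a = Hm x a b.
Proof.
move=> HG HH Hx C1 C2; case: (vinterior_plane Hx) => r [Hr Hb].
rewrite -(plane00 x a b).
apply: (schwarz_square (f := fun u v => Phi (plane x a b u v)) Hr _ C1 C2) => u v Hu Hv.
have Hi := Hb a b u v Hu Hv.
split; first exact: (plane_derivable_u HG).
split; first exact: (plane_derivable_v HG).
split; first exact: (plane_derivable_u (HH b)).
exact: (plane_derivable_v (HH a)).
Qed.

(** * Self-concordant barriers *)

Lemma barrier_hessian_sym n (K : vec n -> Prop) nu F g H T x :
  normal_barrier K nu F g H T -> vinterior K x -> msym (H x).
Proof.
move=> [[Hg [HH [HT HC]]] _] Hx a b; symmetry.
by apply: (has_grad2_sym Hg HH Hx); apply: (continuity_2d_plane_grad (HT _ _)).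
Qed.

Lemma barrier_third_sym n (K : vec n -> Prop) nu F g H T x :
  normal_barrier K nu F g H T -> vinterior K x ->
  forall i j k, T x i j k = T x k j i.
Proof.
move=> HB Hx; have [[Hg [HH [HT HC]]] _] := HB.
have Tjk : forall i j k, T x i j k = T x i k j.
  move=> i j k; symmetry.
  by apply: (has_grad2_sym (Hm := fun z j k => T z i j k) (HH i) (fun j => HT i j) Hx);
    exact: (continuity_2d_plane _ _ (HC _ _ _) Hx).
have Tij : forall i j k, T x i j k = T x j i k.
  move=> i j k; case: (vinterior_line (evec k) Hx) => eta [He Hl].
  have D1 := has_grad_line (p := x) (q := evec k) (t0 := 0) (HT i j).
  have D2 := has_grad_line (p := x) (q := evec k) (t0 := 0) (HT j i).
  rewrite vadd_scale0 dot_evec in D1; rewrite vadd_scale0 dot_evec in D2.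
  apply: (uniqueness_limite (fun t => H (vadd x (vscale t (evec k))) j i) 0); last exact: D2 Hx.
  apply: (derivable_pt_lim_loc He _ (D1 Hx)) => t; rewrite Rminus_0_r => Ht.
  exact: (barrier_hessian_sym HB (Hl t Ht)).
by move=> i j k; rewrite Tij Tjk Tij.
Qed.

Lemma derivable_quad_line n (K : vec n -> Prop) nu F g H T x q u w t0 :
  normal_barrier K nu F g H T -> vinterior K (vadd x (vscale t0 q)) ->
  derivable_pt_lim (fun t => quad (H (vadd x (vscale t q))) u w) t0
    (cubic (T (vadd x (vscale t0 q))) w u q).
Proof.
move=> [[_ [_ [HT _]]] _] Hp.
set l := fun i => vsum (fun j => dot (T (vadd x (vscale t0 q)) i j) q * u j).
rewrite (_ : cubic _ _ _ _ = dot l w); last first.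
  rewrite /cubic /dot /l; apply: eq_vsum => i; rewrite -vsumZr; apply: eq_vsum => j.
  by rewrite /dot -!vsumZr; apply: eq_vsum => k; ring.
apply: (derivable_pt_lim_dot (f := fun i t => mv (H (vadd x (vscale t q))) u i)) => i.
apply: (derivable_pt_lim_vsum (f := fun j t => H (vadd x (vscale t q)) i j * u j)) => j.
apply: (derivable_pt_lim_ext (fun t => u j * H (vadd x (vscale t q)) i j)) => [t|]; first ring.
by rewrite Rmult_comm; apply: derivable_pt_lim_scal; apply: (has_grad_line (HT i j)).
Qed.

Lemma inv_sqrt_growth (q q' : R -> R) eps tau : 0 < eps -> 0 <= tau ->
  (forall t, 0 <= t <= tau -> derivable_pt_lim q t (q' t)) ->
  (forall t, 0 <= t <= tau -> 0 <= q t) ->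
  (forall t, 0 <= t <= tau -> q' t <= 2 * (q t * sqrt (q t))) ->
  / sqrt (q 0 + eps) - tau <= / sqrt (q tau + eps).
Proof.
move=> He Ht Hd Hpos Hb.
set z' := fun t => - (q' t / (2 * sqrt (q t + eps))) / (sqrt (q t + eps)) ^ 2 + 1.
suff : / sqrt (q 0 + eps) + 0 <= / sqrt (q tau + eps) + tau by lra.
apply: (le_of_deriv_nonneg (f := fun t => / sqrt (q t + eps) + t) (f' := z') Ht) => t Hti;
  have Hq := Hpos t Hti; have Hs : 0 < sqrt (q t + eps) by apply: sqrt_lt_R0; lra.
- apply/is_derive_Reals; apply: (is_derive_plus _ (fun t => t)); last exact: is_derive_id.
  apply: (is_derive_inv (fun t => sqrt (q t + eps))); last lra.
  apply: (is_derive_sqrt (fun t => q t + eps)); last lra.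
  rewrite (_ : q' t = plus (q' t) 0); last by rewrite /plus /=; ring.
  apply: (is_derive_plus q (fun _ => eps)); last exact: is_derive_const.
  by apply/is_derive_Reals; apply: Hd.
- have H1 : sqrt (q t) <= sqrt (q t + eps) by apply: sqrt_le_1_alt; lra.
  have H3 : q' t <= 2 * ((q t + eps) * sqrt (q t + eps)).
    by have := Hb t Hti; have := sqrt_pos (q t); nra.
  have Hsq : sqrt (q t + eps) ^ 2 = q t + eps by rewrite /= Rmult_1_r sqrt_sqrt; lra.
  rewrite /z' Hsq.
  have : q' t / (2 * sqrt (q t + eps)) / (q t + eps) <= 1.
    apply: (Rmult_le_reg_r (2 * sqrt (q t + eps) * (q t + eps))); first nra.
    by field_simplify; lra.
  lra.
Qed.

Lemma vinterior_of_barrier_bounded n (K : vec n -> Prop) nu F g H T (u : nat -> vec n) x M :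
  normal_barrier K nu F g H T -> (forall k, vinterior K (u k)) -> vconv u x ->
  (forall k, F (u k) <= M) -> vinterior K x.
Proof.
move=> [_ [_ [_ [Hblow _]]]] Hu Hcv HM; apply: NNPP => Hx.
case: (Hblow u x Hu Hcv Hx M) => N HN.
by have := HN N (le_n N); have := HM N; lra.
Qed.

Section Dikin.
Variables (n : nat) (K : vec n -> Prop) (nu : R) (F : vec n -> R) (g : vec n -> vec n)
  (H : vec n -> mat n n) (T : vec n -> 'I_n -> 'I_n -> 'I_n -> R).
Hypothesis HB : normal_barrier K nu F g H T.
Variables (x h : vec n).
Hypotheses (Hx : vinterior K x) (Hh : quad (H x) h h < 1).

Definition segment_interior tau := forall s, 0 <= s <= tau -> vinterior K (vadd x (vscale s h)).

(* Self-concordance bounds the growth of [t |-> <H(x + t h) h, h>] by that of the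
   solution [1 / (1/sqrt q0 - t)^2] of [q' = 2 q^(3/2)], which stays finite on [0, 1]. *)
Lemma segment_hessian_bounded : exists C, forall tau, tau <= 1 -> segment_interior tau ->
  forall t, 0 <= t <= tau -> quad (H (vadd x (vscale t h))) h h <= C.
Proof.
have [_ [Hpsd [Hsc _]]] := HB.
set q0 := quad (H x) h h; have Hq0 : 0 <= q0 by apply: Hpsd.
have Hq1 : q0 < 1 := Hh.
set eps := (1 - q0) / 2; have Heps : 0 < eps by rewrite /eps; lra.
have Hs1 : sqrt (q0 + eps) < 1 by rewrite -sqrt_1; apply: sqrt_lt_1_alt; rewrite /eps; lra.
set c0 := / sqrt (q0 + eps) - 1.
have Hc0 : 0 < c0.
  suff : 1 < / sqrt (q0 + eps) by rewrite /c0; lra.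
  rewrite -Rinv_1; apply: Rinv_lt_contravar => //.
  by rewrite Rmult_1_r; apply: sqrt_lt_R0; lra.
exists (/ c0 ^ 2) => tau Htau1 Hint t Ht.
set q := fun s => quad (H (vadd x (vscale s h))) h h.
have Hqpos : forall s, 0 <= s <= t -> 0 <= q s by move=> s Hs; apply: Hpsd; apply: Hint; lra.
have Hgrow : / sqrt (q 0 + eps) - t <= / sqrt (q t + eps).
  apply: (inv_sqrt_growth (q' := fun s => cubic (T (vadd x (vscale s h))) h h h) Heps)
    => [||s Hs|s Hs]; try lra.
  - by move=> s Hs; rewrite /q; apply: (derivable_quad_line _ _ HB); apply: Hint; lra.
  - exact: Hqpos.
  - rewrite /q; have := Hsc _ (Hint s ltac:(lra)) h.
    by have := Rle_abs (cubic (T (vadd x (vscale s h))) h h h); lra.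
rewrite {1}/q vadd_scale0 -/q0 in Hgrow.
have Hst : 0 < sqrt (q t + eps) by apply: sqrt_lt_R0; have := Hqpos t ltac:(lra); lra.
have Hsq : sqrt (q t + eps) <= / c0.
  by rewrite -(Rinv_inv (sqrt (q t + eps))); apply: Rinv_le_contravar => //; rewrite /c0; lra.
suff : q t + eps <= / c0 ^ 2 by rewrite /q; lra.
rewrite -(sqrt_sqrt (q t + eps)); last by have := Hqpos t ltac:(lra); lra.
by rewrite /= Rmult_1_r Rinv_mult; have := sqrt_pos (q t + eps); nra.
Qed.

Lemma segment_barrier_bounded : exists M, forall tau, 0 <= tau <= 1 -> segment_interior tau ->
  F (vadd x (vscale tau h)) <= M.
Proof.
have [[Hg _] [Hpsd [_ [_ [Hnu _]]]]] := HB.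
case: segment_hessian_bounded => C HC.
set L := sqrt (Rabs nu * Rabs C).
exists (F x + L) => tau Htau Hint.
suff : L * 0 - F (vadd x (vscale 0 h)) <= L * tau - F (vadd x (vscale tau h)).
  by rewrite vadd_scale0; have := Rmult_le_compat_l L tau 1 (sqrt_pos _) (proj2 Htau); lra.
apply: (le_of_deriv_nonneg (f := fun t => L * t - F (vadd x (vscale t h)))
         (f' := fun t => L - dot (g (vadd x (vscale t h))) h)) => [|t Ht|t Ht]; first lra.
  apply: derivable_pt_lim_minus; last by apply: (has_grad_line Hg); apply: Hint.
  by rewrite -{2}(Rmult_1_r L); apply: derivable_pt_lim_scal; apply: derivable_pt_lim_id.
set d := dot (g (vadd x (vscale t h))) h.
have Hd2 : d ^ 2 <= L ^ 2.
  rewrite /L pow2_sqrt; last by apply: Rmult_le_pos; apply: Rabs_pos.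
  have := Hnu _ (Hint t Ht) h; have := HC tau ltac:(lra) Hint t Ht; have := Hpsd _ (Hint t Ht) h.
  have := Rle_abs nu; have := Rle_abs C; have := Rabs_pos nu; rewrite -/d; nra.
by have := sqrt_pos (Rabs nu * Rabs C); rewrite -/L; nra.
Qed.

(* The barrier stays bounded along the segment, so its end cannot lie on the boundary. *)
Lemma segment_interior_end Ts : 0 < Ts <= 1 ->
  (forall s, 0 <= s < Ts -> segment_interior s) -> vinterior K (vadd x (vscale Ts h)).
Proof.
move=> HTs HA; case: segment_barrier_bounded => M HM.
set t_ := fun k => Ts + (- Ts) * / (INR k + 1).
have Ht : forall k, 0 <= t_ k < Ts.
  move=> k; have Hk := RinvN_pos k; have : / (INR k + 1) <= 1.
    by rewrite -Rinv_1; apply: Rinv_le_contravar; have := pos_INR k; lra.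
  by rewrite /t_; nra.
apply: (vinterior_of_barrier_bounded HB (u := fun k => vadd x (vscale (t_ k) h)) (M := M)).
- by move=> k; have Hk := Ht k; apply: (HA _ Hk); lra.
- move=> i; rewrite /vadd /vscale /t_.
  apply: Un_cv_ext (Un_cv_affine (x i + Ts * h i) (- Ts * h i) Un_cv_inv_INR_succ) => k; ring.
- by move=> k; apply: HM; [have := Ht k; lra | apply: HA; apply: Ht].
Qed.

Lemma dikin_segment : vinterior K (vadd x h).
Proof.
set E := fun t => 0 <= t <= 1 /\ segment_interior t.
have E0 : E 0 by split; [lra | move=> s Hs; rewrite (_ : s = 0); [rewrite vadd_scale0 | lra]].
have Eb : bound E by exists 1 => t [Ht _]; lra.
case: (completeness E Eb (ex_intro _ 0 E0)) => Ts [Hub Hlub].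
have Ts0 : 0 <= Ts by apply: Hub.
have Ts1 : Ts <= 1 by apply: Hlub => t [Ht _]; lra.
have HA : forall s, 0 <= s < Ts -> segment_interior s.
  move=> s Hs r Hr; apply: NNPP => Hn.
  suff : Ts <= r by lra.
  by apply: Hlub => t [Ht Ht']; apply: Rnot_lt_le => Hrt; apply: Hn; apply: Ht'; lra.
have HC : vinterior K (vadd x (vscale Ts h)).
  case: (Req_dec Ts 0) => [->|HTs]; first by rewrite vadd_scale0.
  by apply: segment_interior_end => //; lra.
have HD : Ts = 1.
  apply: NNPP => Hne; case: (vinterior_line h HC) => eta [He Hl].
  set t1 := Ts + Rmin (eta / 2) (1 - Ts).
  have := Rmin_l (eta / 2) (1 - Ts); have := Rmin_r (eta / 2) (1 - Ts).
  have := Rmin_pos (eta / 2) (1 - Ts) ltac:(lra) ltac:(lra) => Hm0 Hm2 Hm1.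
  suff : E t1 by move=> /Hub; rewrite /t1; lra.
  split=> [|s Hs]; first by rewrite /t1; lra.
  case: (Rlt_le_dec s Ts) => Hs'; first by apply: (HA s); lra.
  rewrite (_ : vadd x (vscale s h) = vadd (vadd x (vscale Ts h)) (vscale (s - Ts) h)).
    by apply: Hl; rewrite Rabs_pos_eq; rewrite /t1 in Hs; lra.
  by apply: vext => i; rewrite /vadd /vscale; ring.
move: HC; rewrite HD (_ : vscale 1 h = h) //.
by apply: vext => i; rewrite /vscale; ring.
Qed.

End Dikin.

Lemma vinterior_dikin n (K : vec n -> Prop) nu F g H T x h t :
  normal_barrier K nu F g H T -> vinterior K x ->
  t * t * quad (H x) h h < 1 -> vinterior K (vadd x (vscale t h)).
Proof. by move=> HB Hx Hq; apply: (dikin_segment HB Hx); rewrite quadZl quadZr; lra. Qed.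

Lemma hessian_antitone n (K : vec n -> Prop) nu Fs g H T x h u :
  normal_barrier (dual_cone K) nu Fs g H T -> negative_curvature K T ->
  vinterior (dual_cone K) x -> dual_cone K h ->
  quad (H (vadd x h)) u u <= quad (H x) u u.
Proof.
move=> HB Hnc Hx Hh.
have Hp : forall t, 0 <= t -> vinterior (dual_cone K) (vadd x (vscale t h)).
  by move=> t Ht; apply: vinterior_dualD => //; apply: dual_coneZ.
suff : - quad (H (vadd x (vscale 0 h))) u u <= - quad (H (vadd x (vscale 1 h))) u u.
  by rewrite vadd_scale0 (_ : vscale 1 h = h); [lra | apply: vext => i; rewrite /vscale; ring].
apply: (le_of_deriv_nonneg (f := fun t => - quad (H (vadd x (vscale t h))) u u)
          (f' := fun t => - cubic (T (vadd x (vscale t h))) u u h)) => [|t Ht|t Ht]; first lra.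
  by apply: derivable_pt_lim_opp; apply: (derivable_quad_line _ _ HB); apply: Hp; lra.
rewrite (cubic_sym13 _ _ _ (barrier_third_sym HB (Hp t ltac:(lra)))).
by have := Hnc _ (Hp t ltac:(lra)) h Hh u; lra.
Qed.

Lemma has_grad_scale_eq n (C : vec n -> Prop) phi Gphi psi Gpsi a lam c x j :
  is_cone C -> 0 < lam ->
  has_grad (vinterior C) phi Gphi -> has_grad (vinterior C) psi Gpsi ->
  (forall z, vinterior C z -> a * phi (vscale lam z) = psi z + c) -> vinterior C x ->
  a * lam * Gphi (vscale lam x) j = Gpsi x j.
Proof.
move=> HC Hl Hphi Hpsi Heq Hx.
case: (vinterior_line (evec j) Hx) => eta [He Hline].
have D1 := has_grad_line (p := x) (q := evec j) (t0 := 0) Hpsi.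
rewrite vadd_scale0 dot_evec in D1.
have D2 := has_grad_line (p := vscale lam x) (q := vscale lam (evec j)) (t0 := 0) Hphi.
rewrite vadd_scale0 dotZr dot_evec in D2.
have D2' := derivable_pt_lim_scal _ a 0 _ (D2 (vinterior_coneZ HC Hl Hx)).
rewrite (_ : a * lam * _ = a * (lam * Gphi (vscale lam x) j)); last ring.
apply: (uniqueness_limite _ 0 _ _ D2').
rewrite -(Rplus_0_r (Gpsi x j)).
have D1' := derivable_pt_lim_plus _ _ _ _ _ (D1 Hx) (derivable_pt_lim_const c 0).
apply: (derivable_pt_lim_loc He _ D1') => t; rewrite Rminus_0_r => Ht.
rewrite /plus_fct /fct_cte /mult_real_fct -Heq; last exact: Hline.
by congr (a * phi _); apply: vext => k; rewrite /vadd /vscale; ring.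
Qed.

Lemma barrier_grad_homog n (K : vec n -> Prop) nu F g H T x lam i :
  is_cone K -> normal_barrier K nu F g H T -> vinterior K x -> 0 < lam ->
  lam * g (vscale lam x) i = g x i.
Proof.
move=> HC HB Hx Hl; have [[Hg _] [_ [_ [_ [_ Hhom]]]]] := HB.
rewrite -{1}(Rmult_1_l lam).
apply: (has_grad_scale_eq (c := - nu * ln lam) i HC Hl Hg Hg) => // z Hz.
by rewrite Hhom //; ring.
Qed.

Lemma barrier_hessian_homog n (K : vec n -> Prop) nu F g H T x lam u w :
  is_cone K -> normal_barrier K nu F g H T -> vinterior K x -> 0 < lam ->
  quad (H (vscale lam x)) u w = / (lam * lam) * quad (H x) u w.
Proof.
move=> HC HB Hx Hl; have [[Hg [HH _]] _] := HB.
rewrite -quad_scale_mat; congr quad; apply: functional_extensionality => i; apply: vext => j.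
rewrite -(has_grad_scale_eq (a := lam) (c := 0) j HC Hl (HH i) (HH i) _ Hx); first by field; lra.
by move=> z Hz; rewrite Rplus_0_r; apply: (barrier_grad_homog i HC HB Hz Hl).
Qed.

Lemma solid_orthogonal_eq0 n (K : vec n -> Prop) h :
  solid K -> (forall z, K z -> dot h z = 0) -> h = vzero.
Proof.
move=> [z0 [r [Hr Hz0]]] Hperp; apply: vext => i; rewrite /vzero.
have Hz0' : K z0 by apply: Hz0 => j; rewrite Rminus_diag Rabs_R0.
have Hz1 : K (vadd z0 (vscale (r / 2) (evec i))).
  apply: Hz0 => j; rewrite /vadd /vscale Rplus_minus_l Rabs_mult Rabs_pos_eq; last lra.
  by have := evec_abs i j; have := Rabs_pos (evec i j); nra.
have := Hperp _ Hz1; rewrite dotDr dotZr dot_evec (Hperp _ Hz0') => E.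
have : r / 2 * h i = 0 by lra.
by case/Rmult_integral; lra.
Qed.

(* A null direction of the Hessian spans a whole line inside the dual cone (Dikin),
   which forces it to be orthogonal to [K]. *)
Lemma dual_barrier_hessian_definite n (K : vec n -> Prop) nu F g H T x h :
  normal_barrier (dual_cone K) nu F g H T -> solid K ->
  vinterior (dual_cone K) x -> quad (H x) h h = 0 -> h = vzero.
Proof.
move=> HB Hsolid Hx Hq; apply: (solid_orthogonal_eq0 Hsolid) => z Hz; apply: NNPP => Hne.
have := vinterior_subset (vinterior_dikin (h := h) (t := - (dot x z + 1) / dot h z) HB Hx
  ltac:(rewrite Hq; lra)) z Hz.
rewrite dotDl dotZl (_ : _ * dot h z = - (dot x z + 1)); [lra | by field].
Qed.

(** * The dual problem *)

(* Imported only locally, to keep the mathcomp algebra notations out of the rest of the file. *)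
Section SquareSystem.
Import ssralg matrix mxalgebra Rstruct.

Lemma mv_surj_of_inj m (M : mat m m) :
  (forall v : vec m, mv M v = vzero -> v = vzero) -> forall g : vec m, exists u, mv M u = g.
Proof.
move=> Hinj g; pose Mx : 'M[R]_m := (\matrix_(i, j) M j i)%R.
have key : forall (v : 'rV[R]_m) j, (v *m Mx)%R ord0 j = mv M (fun i => v ord0 i) j.
  by move=> v j; rewrite !mxE /mv /vsum; apply: eq_bigr => i _; rewrite !mxE; apply: Rmult_comm.
have Hu : Mx \in unitmx.
  rewrite -row_free_unit; apply: inj_row_free => v Hv.
  have /(congr1 (fun f => f _)) Hz : (fun i => v ord0 i) = vzero.
    by apply: Hinj; apply: vext => j; rewrite -key Hv mxE.
  by apply/matrixP => i j; rewrite (ord1 i) mxE; apply: Hz.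
exists (fun i => ((\row_i g i) *m invmx Mx)%R ord0 i); apply: vext => j.
by rewrite -key mulmxKV // mxE.
Qed.

End SquareSystem.

Lemma solve_spec m (M : mat m m) g :
  (forall v : vec m, mv M v = vzero -> v = vzero) -> mv M (solve M g) = g.
Proof.
move=> Hinj; apply: (epsilon_spec (inhabits vzero) (fun u => mv M u = g)).
exact: mv_surj_of_inj.
Qed.

Lemma slack_line m n (A : mat m n) c y t v :
  vsub c (mtv A (vadd y (vscale t v))) = vadd (vsub c (mtv A y)) (vscale t (vopp (mtv A v))).
Proof. by rewrite mtvD mtvZ; apply: vext => i; rewrite /vsub /vadd /vscale /vopp; ring. Qed.

Lemma mtv_abs_bound m n (A : mat m n) : exists L, 0 < L /\
  forall z rho j, 0 <= rho -> (forall i, Rabs (z i) <= rho) -> Rabs (mtv A z j) <= L * rho.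
Proof.
have Hcol : forall j, 0 <= vsum (fun i => Rabs (A i j)).
  by move=> j; apply: vsum_ge0 => i; apply: Rabs_pos.
exists (vsum (fun j => vsum (fun i => Rabs (A i j))) + 1); split.
  by have := vsum_ge0 Hcol; lra.
move=> z rho j Hrho Hz; apply: Rle_trans (abs_vsum_le _) _.
apply: Rle_trans (_ : vsum (fun i => Rabs (A i j)) * rho <= _); last first.
  by apply: Rmult_le_compat_r => //; have := ler_vsum_term j Hcol; lra.
rewrite -vsumZr; apply: ler_vsum => i.
by rewrite Rabs_mult; apply: Rmult_le_compat_l; [apply: Rabs_pos|].
Qed.

Section Slack.
Variables (n m : nat) (K : vec n -> Prop) (A : mat m n) (c : vec n).
Local Notation Q := (fun y => dual_cone K (vsub c (mtv A y))).

Lemma vinterior_slack_preimage y :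
  vinterior (dual_cone K) (vsub c (mtv A y)) -> vinterior Q y.
Proof.
case=> r [Hr H]; case: (mtv_abs_bound A) => L [HL HA].
exists (r / (2 * L)); split; first by apply: Rdiv_lt_0_compat; lra.
move=> z Hz; apply: H => j.
rewrite (_ : _ - _ = - mtv A (vsub z y) j); last by rewrite mtvB /vsub; ring.
rewrite Rabs_Ropp; apply: Rle_lt_trans (HA _ (r / (2 * L)) j _ _) _.
- by apply: Rlt_le; apply: Rdiv_lt_0_compat; lra.
- by move=> i; apply: Rlt_le; apply: Hz.
- by rewrite (_ : L * (r / (2 * L)) = r / 2); [lra | field; lra].
Qed.

Variables (ys : vec m) (ss : vec n).
Hypotheses (Hss : vinterior (dual_cone K) ss) (Hc : vadd ss (mtv A ys) = c).

(* [s(y)] is a convex combination of the strictly feasible [ss] and of [s(y2)] for a point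
   [y2] of [Q] slightly beyond [y], away from [ys]. *)
Lemma vinterior_slack y : vinterior Q y -> vinterior (dual_cone K) (vsub c (mtv A y)).
Proof.
move=> [r [Hr H]].
set S := vsum (fun i => Rabs (y i - ys i)) + 1.
have HS : 0 < S by rewrite /S; have := vsum_ge0 (fun i => Rabs_pos (y i - ys i)); lra.
set e := r / S; have He : 0 < e by apply: Rdiv_lt_0_compat.
set y2 := vadd y (vscale e (vsub y ys)).
have Hy2 : dual_cone K (vsub c (mtv A y2)).
  apply: H => i; rewrite /y2 /vadd /vscale /vsub Rplus_minus_l Rabs_mult Rabs_pos_eq; last lra.
  have := ler_abs_vsum (fun i => y i - ys i) i; have : e * S = r by rewrite /e; field; lra.
  by have := Rabs_pos (y i - ys i); rewrite /S; nra.
rewrite (_ : vsub c (mtv A y) =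
    vadd (vscale (e / (1 + e)) ss) (vscale (/ (1 + e)) (vsub c (mtv A y2)))); last first.
  rewrite /y2 mtvD mtvZ mtvB -Hc; apply: vext => j.
  by rewrite /vadd /vsub /vscale; field; lra.
apply: vinterior_dualD.
  by apply: (vinterior_coneZ (is_cone_dual (K := K))) => //; apply: Rdiv_lt_0_compat; lra.
by apply: dual_coneZ => //; apply: Rlt_le; apply: Rinv_0_lt_compat; lra.
Qed.

Variables (nu : R) (Fs : vec n -> R) (gFs : vec n -> vec n) (HFs : vec n -> mat n n)
  (TFs : vec n -> 'I_n -> 'I_n -> 'I_n -> R) (gf : vec m -> vec m) (Hf : vec m -> mat m m).
Hypothesis HB : normal_barrier (dual_cone K) nu Fs gFs HFs TFs.
Hypothesis Hgf : has_grad (vinterior Q) (fun y => Fs (vsub c (mtv A y))) gf.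
Hypothesis HHf : forall i, has_grad (vinterior Q) (fun y => gf y i) (fun y j => Hf y i j).

Lemma grad_f_slack y p : vinterior Q y ->
  dot (gf y) p = - dot (gFs (vsub c (mtv A y))) (mtv A p).
Proof.
move=> HQ; have [[Hg _] _] := HB.
have D := has_grad_line (p := vsub c (mtv A y)) (q := vopp (mtv A p)) (t0 := 0) Hg.
rewrite vadd_scale0 dotNr in D.
apply: (uniqueness_limite _ 0 _ _ (Hgf HQ p)).
apply: (derivable_pt_lim_ext _ _ _ _ _ (D (vinterior_slack HQ))) => t /=.
by rewrite slack_line.
Qed.

Lemma hess_f_slack y h p : vinterior Q y ->
  quad (Hf y) h p = quad (HFs (vsub c (mtv A y))) (mtv A h) (mtv A p).
Proof.
move=> HQ; have [[_ [HH _]] _] := HB.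
set s := vsub c (mtv A y); set q := vopp (mtv A h).
have D1 : derivable_pt_lim (fun t => dot (fun i => gf (vadd y (vscale t h)) i) p) 0
            (quad (Hf y) h p).
  apply: (derivable_pt_lim_dot (f := fun i t => gf (vadd y (vscale t h)) i)) => i.
  exact: (HHf i HQ h).
have D2 : derivable_pt_lim (fun t => dot (fun l => - gFs (vadd s (vscale t q)) l) (mtv A p)) 0
            (dot (fun l => - dot (HFs s l) q) (mtv A p)).
  apply: (derivable_pt_lim_dot (f := fun l t => - gFs (vadd s (vscale t q)) l)) => l.
  apply: derivable_pt_lim_opp; rewrite -{2}(vadd_scale0 s q).
  by apply: (has_grad_line (HH l)); rewrite vadd_scale0; apply: vinterior_slack.
rewrite (_ : quad (HFs s) _ _ = dot (fun l => - dot (HFs s l) q) (mtv A p)); last first.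
  by rewrite /quad /q; congr dot; apply: vext => l; rewrite dotNr Ropp_involutive.
apply: (uniqueness_limite _ 0 _ _ D1).
case: (vinterior_line h HQ) => eta [He Hl].
apply: (derivable_pt_lim_loc He _ D2) => t; rewrite Rminus_0_r => Ht.
rewrite (grad_f_slack _ (Hl t Ht)) slack_line -/s -/q.
by rewrite /dot -vsumN; apply: eq_vsum => l; ring.
Qed.

Hypothesis Hsolid : solid K.
Hypothesis HAsurj : forall w : vec m, exists x : vec n, mv A x = w.

(* The Hessian of [f] is [A HFs A^*], nondegenerate because [HFs] is and [A] is onto. *)
Lemma hess_f_injective y : vinterior Q y -> forall h, mv (Hf y) h = vzero -> h = vzero.
Proof.
move=> HQ h Hh.
have HA0 : mtv A h = vzero.
  apply: (dual_barrier_hessian_definite HB Hsolid (vinterior_slack HQ)).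
  by rewrite -hess_f_slack // /quad Hh dotC dot0r.
apply: dot_self_eq0; case: (HAsurj h) => x Hx.
by rewrite -{2}Hx -dot_mtv HA0 dotC dot0r.
Qed.

End Slack.

(** * Elementary inequalities *)

Lemma discriminant_le P B Q : 0 <= P ->
  (forall t, 0 <= P * (t * t) + 2 * B * t + Q) -> B * B <= P * Q.
Proof.
move=> HP Hpos; case: (Rle_lt_or_eq_dec _ _ HP) => [HP0|HP0]; last subst P.
  have := Hpos (- B / P); rewrite (_ : _ + _ + Q = Q - B * B / P); last by field; lra.
  move=> H; have := Rmult_le_compat_r P _ _ (Rlt_le _ _ HP0) (_ : B * B / P <= Q).
  by rewrite (_ : B * B / P * P = B * B); [lra | field; lra].
case: (Req_dec B 0) => [->|HB]; first lra.
by have := Hpos (- (Q + 1) / (2 * B)); rewrite (_ : 2 * B * _ = - (Q + 1)); [lra | field].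
Qed.

Lemma quad_cauchy_schwarz n (M : mat n n) p q : msym M -> (forall z, 0 <= quad M z z) ->
  quad M p q <= sqrt (quad M p p) * sqrt (quad M q q).
Proof.
move=> HM Hpsd; rewrite -sqrt_mult ?Hpsd //.
apply: Rle_trans (Rle_abs _) _; rewrite -sqrt_Rsqr_abs; apply: sqrt_le_1_alt.
rewrite /Rsqr; apply: discriminant_le => // t.
have := Hpsd (vadd (vscale t p) q); rewrite quad_expandD // !quadZl !quadZr; lra.
Qed.

(* Polarization: the bilinear form of [Ht - Hs] is controlled by the two-sided bounds
   [lo Hs <= Ht <= hi Hs] on its diagonal; [mu] is a free balancing parameter. *)
Lemma polar_bound n (Ht Hs : mat n n) lo hi d u mu :
  msym Ht -> msym Hs -> (forall z, 0 <= quad Hs z z) ->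
  (forall z, lo * quad Hs z z <= quad Ht z z) ->
  (forall z, quad Ht z z <= hi * quad Hs z z) -> lo <= 1 -> 1 <= hi -> 0 < mu ->
  quad Ht d u - quad Hs d u <= ((1 - lo) + (hi - 1)) / 2 * (mu * quad Hs d d + quad Hs u u / mu).
Proof.
move=> St Ss Hpsd Hlo Hhi Hl1 Hh1 Hmu.
set l := sqrt mu; have Hl : 0 < l by apply: sqrt_lt_R0.
have Hl2 : l * l = mu by rewrite /l sqrt_sqrt; lra.
set p := vscale l d; set q := vscale (/ l) u.
have Epp : forall M : mat n n, quad M p p = mu * quad M d d.
  by move=> M; rewrite /p quadZl quadZr -Hl2; ring.
have Eqq : forall M : mat n n, quad M q q = quad M u u / mu.
  by move=> M; rewrite /q quadZl quadZr -Hl2; field; lra.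
have Epq : forall M : mat n n, quad M p q = quad M d u.
  by move=> M; rewrite /p /q quadZl quadZr; field; lra.
have e1 := Hhi (vadd p q); have e2 := Hlo (vsub p q).
have e3 := Hpsd (vadd p q); have e4 := Hpsd (vsub p q).
rewrite !quad_expandD // in e1 e3; rewrite !quad_expandB // in e2 e4.
rewrite !Epp !Eqq !Epq in e1 e2 e3 e4.
set S := mu * quad Hs d d + quad Hs u u / mu; set B := quad Hs d u.
have h1 : 0 <= (S - 2 * B) * ((hi - lo) + (hi + lo - 2)) by apply: Rmult_le_pos; rewrite /S /B; lra.
have h2 : 0 <= (S + 2 * B) * ((hi - lo) - (hi + lo - 2)) by apply: Rmult_le_pos; rewrite /S /B; lra.
by rewrite /S /B in h1 h2 *; nra.
Qed.

(* The least feasible [rho] is minus the supremum of the [- rho], since [completeness] only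
   provides suprema. *)
Lemma is_sigma_exists n (K : vec n -> Prop) s h : dual_cone K s ->
  (exists rho, 0 <= rho /\ dual_cone K (vsub (vscale rho s) h)) -> exists r, is_sigma K s h r.
Proof.
move=> Hs [rho0 [Hr0 Hd0]].
set E := fun z => exists rho, z = - rho /\ 0 <= rho /\ dual_cone K (vsub (vscale rho s) h).
have Eb : bound E by exists 0 => z [rho [-> [H1 _]]]; lra.
have Ene : exists z, E z by exists (- rho0), rho0.
case: (completeness E Eb Ene) => m [Hub Hlub].
have Hm0 : m <= 0 by apply: Hlub => z [rho [-> [H1 _]]]; lra.
exists (- m); split; first lra; split; last first.
  move=> r' Hr' Hd'; suff : - r' <= m by lra.
  by apply: Hub; exists r'.
move=> x Hx; rewrite dotBl dotZl.
have Hsx := Hs x Hx.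
have Hfeas : forall rho, 0 <= rho -> dual_cone K (vsub (vscale rho s) h) ->
    dot h x <= rho * dot s x.
  by move=> rho _ Hd; have := Hd x Hx; rewrite dotBl dotZl; lra.
case: (Rle_lt_or_eq_dec _ _ Hsx) => [Hpos|Hz]; last by have := Hfeas _ Hr0 Hd0; rewrite -Hz; lra.
have : m <= - (dot h x / dot s x).
  apply: Hlub => z [rho [-> [Hr Hd]]]; have := Hfeas _ Hr Hd.
  move=> H1; apply: Ropp_le_contravar.
  by apply: (Rmult_le_reg_r (dot s x)) => //; field_simplify; lra.
move=> H1; have := Rmult_le_compat_r (dot s x) _ _ (Rlt_le _ _ Hpos) (Ropp_le_contravar _ _ H1).
by rewrite Ropp_involutive (_ : dot h x / dot s x * dot s x = dot h x); [lra | field; lra].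
Qed.

Lemma xi_excess_bounds al de ab : 0 < de -> 0 <= al -> al <= / 6 -> al * de <= / 6 -> / de <= ab ->
  0 <= xi ab al - 1 - al /\ de * (xi ab al - 1 - al) <= / 30 /\ xi ab al <= 6 / 5.
Proof.
move=> Hde Hal Hal6 Hp Hab.
have Hab0 : 0 < ab by have := Rinv_0_lt_compat de Hde; lra.
have Hr : al / ab <= al * de.
  apply: Rmult_le_compat_l => //; rewrite -(Rinv_inv de).
  by apply: Rinv_le_contravar => //; apply: Rinv_0_lt_compat.
have Hr0 : 0 <= al / ab by apply: Rdiv_le_0_compat; lra.
have Hgap : 5 / 6 * ab <= ab - al.
  suff : al <= ab / 6 by lra.
  have := Rmult_le_compat_r ab _ _ (Rlt_le _ _ Hab0) (Rle_trans _ _ _ Hr Hp).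
  by rewrite /Rdiv Rmult_assoc Rinv_l; lra.
have EX : xi ab al - 1 - al = al * (al / ab) / (1 - al / ab) by rewrite /xi; field; lra.
have Hfrac : al / ab / (1 - al / ab) <= / 5.
  apply: (Rmult_le_reg_r (1 - al / ab)); first lra.
  by rewrite /Rdiv Rmult_assoc Rinv_l; lra.
have Hfrac0 : 0 <= al / ab / (1 - al / ab) by apply: Rdiv_le_0_compat; lra.
rewrite EX (_ : al * (al / ab) / _ = al * (al / ab / (1 - al / ab))); last by field; lra.
split; first exact: Rmult_le_pos.
split.
  by rewrite -Rmult_assoc (Rmult_comm de); have := Rmult_le_pos _ _ Hal (Rlt_le _ _ Hde); nra.
rewrite /xi (_ : al * ab / (ab - al) = al / (1 - al / ab)); last by field; lra.
suff : al / (1 - al / ab) <= / 5 by lra.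
apply: (Rmult_le_reg_r (1 - al / ab)); first lra.
by rewrite /Rdiv Rmult_assoc Rinv_l; lra.
Qed.

(* The numerical core of the theorem: with [alpha ||v||_y <= 1/6] and [beta <= 1/25] every
   term of the residual estimate is small; the constants leave a margin of about [0.005]. *)
Lemma newton_step_arith al de si ab be D :
  0 < de -> 0 <= al -> al <= / 6 -> al * de <= / 6 -> 0 <= si -> si <= de -> / de <= ab ->
  0 <= be -> be <= / 25 ->
  D <= de * (2 * (xi ab al - 1 - al) + (al - al / (1 + al * si))) + xi ab al * be ->
  (1 + al * si) * D <= / 6.
Proof.
move=> Hde Hal Hal6 Hp Hsi Hsid Hab Hbe Hbe25 HD.
have [HX0 [HdeX Hxi6]] := xi_excess_bounds Hde Hal Hal6 Hp Hab.
have Has : al * si <= / 6 by have := Rmult_le_compat_l _ _ _ Hal Hsid; lra.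
have Has0 : 0 <= al * si by apply: Rmult_le_pos.
apply: (Rle_trans _ _ _ (Rmult_le_compat_l (1 + al * si) _ _ ltac:(lra) HD)).
rewrite (_ : _ * (_ + _) = (1 + al * si) * (de * (2 * (xi ab al - 1 - al))) + al * de * (al * si)
                          + (1 + al * si) * (xi ab al * be)); last by field; lra.
have T1 : (1 + al * si) * (de * (2 * (xi ab al - 1 - al))) <= 7 / 6 * (2 / 30) by nra.
have T2 : al * de * (al * si) <= / 36.
  by have := Rmult_le_pos _ _ Hal (Rlt_le _ _ Hde); nra.
have T3 : (1 + al * si) * (xi ab al * be) <= 7 / 6 * (6 / 5 * / 25).
  have H0 : 0 <= xi ab al by lra.
  have H1 : xi ab al * be <= 6 / 5 * / 25 by apply: Rmult_le_compat.
  by have := Rmult_le_pos _ _ H0 Hbe; nra.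
lra.
Qed.

(** * The dual barrier along the Newton ray *)

Section DualRay.
Variables (n : nat) (K : vec n -> Prop) (nu : R) (Fs : vec n -> R) (g : vec n -> vec n)
  (H : vec n -> mat n n) (T : vec n -> 'I_n -> 'I_n -> 'I_n -> R).
Hypothesis HB : normal_barrier (dual_cone K) nu Fs g H T.
Variables (s q : vec n).
Hypothesis Hs : vinterior (dual_cone K) s.

Local Notation ray t := (vadd s (vscale t q)).
Local Notation de := (sqrt (quad (H s) q q)).

Lemma hessian_psd z : 0 <= quad (H s) z z.
Proof. by have [_ [Hpsd _]] := HB; apply: Hpsd. Qed.

Lemma local_norm_sqr : quad (H s) q q = de * de.
Proof. by rewrite sqrt_sqrt //; apply: hessian_psd. Qed.

Lemma ray_interior t : 0 <= t -> t * de < 1 -> vinterior (dual_cone K) (ray t).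
Proof.
move=> Ht Htd; apply: (vinterior_dikin HB Hs).
rewrite local_norm_sqr (_ : t * t * _ = (t * de) * (t * de)); last ring.
by have := Rmult_le_pos _ _ Ht (sqrt_pos (quad (H s) q q)); nra.
Qed.

Lemma scaled_slack_feasible rho : de < rho -> dual_cone K (vsub (vscale rho s) q).
Proof.
move=> Hrho; have Hr : 0 < rho by have := sqrt_pos (quad (H s) q q); lra.
rewrite (_ : vsub _ q = vscale rho (vadd s (vscale (- / rho) q))); last first.
  by apply: vext => i; rewrite /vsub /vscale /vadd; field; lra.
apply: dual_coneZ; first lra; apply: vinterior_subset; apply: (vinterior_dikin HB Hs).
rewrite local_norm_sqr (_ : _ * _ * _ = (de / rho) * (de / rho)); last by field; lra.
have : de / rho < 1 by apply: (Rmult_lt_reg_r rho) => //; field_simplify; lra.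
by have := Rdiv_le_0_compat _ _ (sqrt_pos (quad (H s) q q)) Hr; nra.
Qed.

Lemma sigmaK_spec : is_sigma K s q (sigmaK K s q).
Proof.
rewrite /sigmaK; apply: (epsilon_spec (inhabits R0) (is_sigma K s q)).
apply: (is_sigma_exists (vinterior_subset Hs)); exists (de + 1).
by split; [have := sqrt_pos (quad (H s) q q); lra | apply: scaled_slack_feasible; lra].
Qed.

Lemma sigmaK_le_local_norm : sigmaK K s q <= de.
Proof.
have [Hsi0 [_ Hmin]] := sigmaK_spec; apply: Rnot_lt_le => Hlt.
suff : sigmaK K s q <= (sigmaK K s q + de) / 2 by lra.
have := sqrt_pos (quad (H s) q q).
by move=> ?; apply: Hmin; [lra | apply: scaled_slack_feasible; lra].
Qed.

Variable abar : R.
Hypothesis Habar : is_lub (fun a => 0 <= a /\ dual_cone K (ray a)) abar.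

Lemma step_le_max a : 0 <= a -> a * de < 1 -> a <= abar.
Proof.
by move=> Ha Had; apply: (proj1 Habar); split => //; apply: vinterior_subset; apply: ray_interior.
Qed.

Lemma local_norm_pos : 0 < de.
Proof.
case: (Rle_lt_or_eq_dec _ _ (sqrt_pos (quad (H s) q q))) => // Hde.
have := step_le_max (a := 0) (Rle_refl 0) ltac:(rewrite -Hde; lra).
by have := step_le_max (a := abar + 1); rewrite -Hde; lra.
Qed.

Lemma max_step_ge : / de <= abar.
Proof.
have Hde := local_norm_pos; apply: Rnot_lt_le => Hlt.
have Hi : 0 < / de by apply: Rinv_0_lt_compat.
have Hab0 : 0 <= abar by apply: step_le_max; lra.
suff : (abar + / de) / 2 <= abar by lra.
apply: step_le_max; first lra.
have := Rmult_lt_compat_r de _ _ Hde (_ : (abar + / de) / 2 < / de); rewrite Rinv_l; lra.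
Qed.

(* Closedness of [K^*] along the ray: a constraint violated at [abar] would already cut the
   ray strictly before [abar]. *)
Lemma max_step_feasible : dual_cone K (ray abar).
Proof.
move=> x Hx; rewrite dotDl dotZl; apply: Rnot_lt_le => Hneg.
have Hsx := vinterior_subset Hs x Hx.
have Hab0 : 0 < abar by have := max_step_ge; have := Rinv_0_lt_compat _ local_norm_pos; lra.
have Hqx : dot q x < 0 by nra.
suff : abar <= dot s x / - dot q x.
  move=> H1; have := Rmult_le_compat_r (- dot q x) _ _ ltac:(lra) H1.
  by rewrite (_ : _ / _ * _ = dot s x); [lra | field; lra].
apply: (proj2 Habar) => a [Ha Hda]; have := Hda x Hx; rewrite dotDl dotZl => H1.
by apply: (Rmult_le_reg_r (- dot q x)); [lra | field_simplify; lra].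
Qed.

Lemma max_step_pos : 0 < abar.
Proof. by have := max_step_ge; have := Rinv_0_lt_compat _ local_norm_pos; lra. Qed.

Hypothesis Hneg : negative_curvature K T.

(* [ray t] lies between [s] and the boundary point [ray abar]. *)
Lemma hessian_ray_upper t z : 0 <= t < abar ->
  quad (H (ray t)) z z <= / ((1 - t / abar) * (1 - t / abar)) * quad (H s) z z.
Proof.
move=> Ht; have Hab := max_step_pos.
have Hl : 0 < 1 - t / abar.
  suff : t / abar < 1 by lra.
  by apply: (Rmult_lt_reg_r abar) => //; field_simplify; lra.
rewrite (_ : ray t = vadd (vscale (1 - t / abar) s) (vscale (t / abar) (ray abar))); last first.
  by apply: vext => i; rewrite /vadd /vscale; field; lra.
apply: Rle_trans (hessian_antitone z HB Hneg (vinterior_coneZ (is_cone_dual (K := K)) Hl Hs)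
  (dual_coneZ (Rdiv_le_0_compat _ _ (proj1 Ht) Hab) max_step_feasible)) _.
by rewrite (barrier_hessian_homog _ _ (is_cone_dual (K := K)) HB Hs Hl); lra.
Qed.

(* [ray t] plus the feasible direction [t (sigma s - q)] is a multiple of [s]. *)
Lemma hessian_ray_lower t z : 0 <= t -> vinterior (dual_cone K) (ray t) ->
  / ((1 + t * sigmaK K s q) * (1 + t * sigmaK K s q)) * quad (H s) z z <= quad (H (ray t)) z z.
Proof.
move=> Ht Hrt; have [Hsi0 [Hsid _]] := sigmaK_spec.
have Hl : 0 < 1 + t * sigmaK K s q by nra.
have := hessian_antitone z HB Hneg Hrt (dual_coneZ Ht Hsid).
rewrite (_ : vadd (ray t) _ = vscale (1 + t * sigmaK K s q) s); last first.
  by apply: vext => i; rewrite /vadd /vscale /vsub; ring.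
by rewrite (barrier_hessian_homog _ _ (is_cone_dual (K := K)) HB Hs Hl); lra.
Qed.
Local Notation si := (sigmaK K s q).
Local Notation lo t := (/ ((1 + t * si) * (1 + t * si))).
Local Notation hi t := (/ ((1 - t / abar) * (1 - t / abar))).

Lemma hessian_ray_polar t u : 0 <= t < abar -> vinterior (dual_cone K) (ray t) ->
  0 < quad (H s) u u ->
  quad (H s) q u - quad (H (ray t)) q u <= ((1 - lo t) + (hi t - 1)) * (de * sqrt (quad (H s) u u)).
Proof.
move=> Ht Hrt Hu; have [Hsi0 _] := sigmaK_spec.
have Hde := local_norm_pos; have Hab := max_step_pos.
set D := sqrt (quad (H s) u u); have HD : 0 < D by apply: sqrt_lt_R0.
have Hlo1 : lo t <= 1.
  rewrite -Rinv_1; apply: Rinv_le_contravar; first lra.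
  by have := Rmult_le_pos _ _ (proj1 Ht) Hsi0; nra.
have Hhi1 : 1 <= hi t.
  have Hl : 0 < 1 - t / abar.
    suff : t / abar < 1 by lra.
    by apply: (Rmult_lt_reg_r abar) => //; field_simplify; lra.
  have : 0 <= t / abar by apply: Rdiv_le_0_compat; lra.
  by move=> ?; rewrite -Rinv_1; apply: Rinv_le_contravar; nra.
have := polar_bound (mu := D / de) q (vopp u) (barrier_hessian_sym HB Hrt)
  (barrier_hessian_sym HB Hs) hessian_psd (fun z => hessian_ray_lower z (proj1 Ht) Hrt)
  (fun z => hessian_ray_upper z Ht) Hlo1 Hhi1 (Rdiv_lt_0_compat _ _ HD Hde).
have Edd := local_norm_sqr; set e := sqrt (quad (H s) q q) in Hde Edd *.
rewrite !quadNr quadNl Ropp_involutive Edd -(sqrt_sqrt (quad (H s) u u)); last exact: hessian_psd.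
by rewrite -/D (_ : D / e * (e * e) + D * D / (D / e) = 2 * (e * D)); [lra | field; lra].
Qed.

(* Integrating [hessian_ray_polar] along the ray: [alpha - alpha / (1 + alpha si)] and
   [alpha abar / (abar - alpha) - alpha] are the integrals of [1 - lo] and [hi - 1]. *)
Lemma grad_ray_lower alpha u : 0 <= alpha < abar ->
  (forall t, 0 <= t <= alpha -> vinterior (dual_cone K) (ray t)) -> 0 < quad (H s) u u ->
  dot (g s) u + alpha * quad (H s) q u - de * sqrt (quad (H s) u u) *
    ((alpha - alpha / (1 + alpha * si)) + (alpha * abar / (abar - alpha) - alpha))
  <= dot (g (ray alpha)) u.
Proof.
move=> Hal Hray Hu; have [Hsi0 _] := sigmaK_spec; have [[_ [HH _]] _] := HB.
set P := quad (H s) q u; set C := de * sqrt (quad (H s) u u).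
set psi := fun t => dot (g (ray t)) u - t * P +
  C * ((t - t / (1 + t * si)) + (t * abar / (abar - t) - t)).
suff : psi 0 <= psi alpha.
  rewrite /psi vadd_scale0 (_ : 0 / (1 + 0 * si) = 0); last by field; lra.
  by rewrite (_ : 0 * abar / (abar - 0) = 0); [lra | field; lra].
apply: (le_of_deriv_nonneg
  (f' := fun t => quad (H (ray t)) q u - P + C * ((1 - lo t) + (hi t - 1)))) => [|t Ht|t Ht].
- lra.
- have Hl : 0 < 1 + t * si by have := Rmult_le_pos _ _ (proj1 Ht) Hsi0; lra.
  apply: derivable_pt_lim_plus; first apply: derivable_pt_lim_minus.
  + apply: (derivable_pt_lim_dot (f := fun l t => g (ray t) l)
      (l := fun l => dot (H (ray t) l) q)) => l.
    exact: (has_grad_line (HH l) (Hray t Ht)).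
  + by rewrite -{2}(Rmult_1_l P); apply: derivable_pt_lim_scal_right; apply: derivable_pt_lim_id.
  + apply: derivable_pt_lim_scal; apply/is_derive_Reals.
    by auto_derive; [repeat split; lra | field; repeat split; lra].
- have := hessian_ray_polar (t := t) ltac:(lra) (Hray t Ht) Hu; rewrite -/P -/C; lra.
Qed.
End DualRay.

(** * The Newton step *)

Section NewtonStep.
Variables (n m : nat) (K : vec n -> Prop) (nu : R) (Fs : vec n -> R) (gFs : vec n -> vec n)
  (HFs : vec n -> mat n n) (TFs : vec n -> 'I_n -> 'I_n -> 'I_n -> R)
  (A : mat m n) (c : vec n) (gf : vec m -> vec m) (Hf : vec m -> mat m m) (ys : vec m) (ss : vec n).
Local Notation Q := (fun y => dual_cone K (vsub c (mtv A y))).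
Hypotheses (HB : normal_barrier (dual_cone K) nu Fs gFs HFs TFs) (Hsolid : solid K)
  (HAsurj : forall w : vec m, exists x : vec n, mv A x = w)
  (Hss : vinterior (dual_cone K) ss) (Hc : vadd ss (mtv A ys) = c)
  (Hgf : has_grad (vinterior Q) (fun y => Fs (vsub c (mtv A y))) gf)
  (HHf : forall i, has_grad (vinterior Q) (fun y => gf y i) (fun y j => Hf y i j)).
Variable y : vec m.
Hypothesis HyQ : vinterior Q y.

Local Notation M := (Hf y).
Local Notation s := (vsub c (mtv A y)).
Local Notation v := (solve (Hf y) (gf y)).
Local Notation q := (vopp (mtv A v)).
Local Notation de := (sqrt (quad (HFs s) q q)).
Local Notation si := (sigmaK K s q).

Lemma hess_f_solve g : mv M (solve M g) = g.
Proof. exact: solve_spec g (hess_f_injective Hss Hc HB Hgf HHf Hsolid HAsurj HyQ). Qed.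

Lemma hess_f_quad h p : quad M h p = quad (HFs s) (mtv A h) (mtv A p).
Proof. exact: (hess_f_slack Hss Hc HB Hgf HHf h p HyQ). Qed.

Lemma hess_f_sym : msym M.
Proof.
move=> i j; rewrite -!quad_evec !hess_f_quad.
exact: quadC (barrier_hessian_sym HB (vinterior_slack Hss Hc HyQ)).
Qed.

Lemma hess_f_psd z : 0 <= quad M z z.
Proof.
by rewrite hess_f_quad; have [_ [Hpsd _]] := HB; apply: Hpsd; exact: (vinterior_slack Hss Hc HyQ).
Qed.

Lemma dnorm_quad g : dnorm M g = sqrt (quad M (solve M g) (solve M g)).
Proof. by rewrite /dnorm /quad hess_f_solve. Qed.

Lemma dot_le_dnorm g w : dot g w <= dnorm M g * sqrt (quad M w w).
Proof.
rewrite dnorm_quad -{1}(hess_f_solve g) -/(quad M (solve M g) w).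
exact: quad_cauchy_schwarz hess_f_sym hess_f_psd.
Qed.

Lemma lnorm_newton : lnorm M v = de.
Proof. by rewrite /lnorm hess_f_quad quadNl quadNr Ropp_involutive. Qed.

(* [M v = gf y] evaluated against [w], once through [M = A HFs A^*] and once through
   the chain rule for the gradient. *)
Lemma grad_slack_newton w : dot (gFs s) (mtv A w) = quad (HFs s) q (mtv A w).
Proof.
have := grad_f_slack Hss Hc HB Hgf w HyQ.
by rewrite -{1}(hess_f_solve (gf y)) -/(quad M v w) hess_f_quad quadNl; lra.
Qed.

Hypothesis Hneg : negative_curvature K TFs.
Variable abar : R.
Hypothesis Habar : is_lub (fun a => 0 <= a /\ dual_cone K (vadd s (vscale a q))) abar.
Variables (b : vec m) (mu beta alpha : R).
Hypotheses (Hbeta : dnorm M (vsub (gf y) (vscale (/ mu) b)) <= beta)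
  (Hal : 0 <= alpha) (Hstep : alpha * de <= / 6).

Lemma newton_ray_interior t : 0 <= t <= alpha -> vinterior (dual_cone K) (vadd s (vscale t q)).
Proof.
move=> Ht; apply: (ray_interior HB (vinterior_slack Hss Hc HyQ) (proj1 Ht)).
by have := Rmult_le_compat_r _ _ _ (sqrt_pos (quad (HFs s) q q)) (proj2 Ht); lra.
Qed.

Lemma newton_step_lt_max : alpha < abar.
Proof.
have Hs := vinterior_slack Hss Hc HyQ; have Hde := local_norm_pos HB Hs Habar.
have := max_step_ge HB Hs Habar.
suff : alpha < / de by lra.
by apply: (Rmult_lt_reg_r de) => //; rewrite Rinv_l; lra.
Qed.

(* With [r] the residual at the new point and [u = A^* M^{-1} r]: by [grad_slack_newton] and
   the chain rule, [||r||_y^2] equals [-<gFs(s + alpha q), u> + xi (<HFs(s) q, u> + <e, M^{-1} r>)]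
   where [e] is the old residual; [grad_ray_lower] and Cauchy-Schwarz bound each term. *)
Lemma newton_residual_bound :
  dnorm M (vsub (gf (vadd y (vscale alpha v))) (vscale (xi abar alpha / mu) b))
  <= de * (2 * (xi abar alpha - 1 - alpha) + (alpha - alpha / (1 + alpha * si)))
     + xi abar alpha * beta.
Proof.
have Hs := vinterior_slack Hss Hc HyQ; have Hde := local_norm_pos HB Hs Habar.
have Hlt := newton_step_lt_max; have [Hsi0 _] := sigmaK_spec HB q Hs.
have EX : xi abar alpha - 1 - alpha = alpha * alpha / (abar - alpha) by rewrite /xi; field; lra.
have HX : 0 <= xi abar alpha - 1 - alpha by rewrite EX; apply: Rdiv_le_0_compat; nra.
have HA : 0 <= alpha - alpha / (1 + alpha * si).
  rewrite (_ : _ - _ = alpha * (alpha * si) / (1 + alpha * si)); last by field; nra.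
  by apply: Rdiv_le_0_compat; nra.
have Hbeta0 : 0 <= beta by have := Rle_trans _ _ _ (sqrt_pos _) Hbeta.
set r := vsub _ _; set w := solve M r; set u := mtv A w.
have HD : dnorm M r = sqrt (quad (HFs s) u u) by rewrite dnorm_quad hess_f_quad.
rewrite HD; case: (Rle_lt_or_eq_dec _ _ (hessian_psd HB Hs u)) => [Hu|<-]; last first.
  by rewrite sqrt_0; have := sqrt_pos (quad (HFs s) q q); nra.
set D := sqrt (quad (HFs s) u u); have HD0 : 0 < D by apply: sqrt_lt_R0.
have HDD : dot r w = D * D by rewrite /D sqrt_sqrt; [rewrite -hess_f_quad /quad hess_f_solve | lra].
have Hnew : dot (gf (vadd y (vscale alpha v))) w = - dot (gFs (vadd s (vscale alpha q))) u.
  rewrite (grad_f_slack Hss Hc HB Hgf w) ?slack_line //.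
  by apply: vinterior_slack_preimage; rewrite slack_line; apply: newton_ray_interior; lra.
have Hold : dot (gf y) w = - quad (HFs s) q u.
  by rewrite (grad_f_slack Hss Hc HB Hgf w HyQ) grad_slack_newton.
have Hray := grad_ray_lower HB Hs Habar Hneg (conj Hal Hlt) newton_ray_interior Hu.
rewrite (grad_slack_newton w) -/u -/D in Hray.
have He := dot_le_dnorm (vsub (gf y) (vscale (/ mu) b)) w.
rewrite hess_f_quad -/u -/D in He.
have Hcs := quad_cauchy_schwarz q u (barrier_hessian_sym HB Hs) (hessian_psd HB Hs).
rewrite -/D in Hcs.
set P := quad (HFs s) q u in Hold Hray Hcs; set G := dot (gFs _) u in Hnew Hray.
set xa := xi abar alpha in EX HX *; set Bw := dot b w.
rewrite /r dotBl dotZl Hnew (_ : xa / mu * Bw = xa * (/ mu * Bw)) in HDD; last first.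
  by rewrite /Rdiv; ring.
rewrite dotBl dotZl Hold -/Bw in He.
have He' : - P - / mu * Bw <= beta * D.
  by have := Rmult_le_compat_r D _ _ (Rlt_le _ _ HD0) Hbeta; lra.
have T1 := Rmult_le_compat_l xa _ _ ltac:(lra) He'.
have T2 := Rmult_le_compat_l _ _ _ HX Hcs.
rewrite (_ : alpha * abar / (abar - alpha) - alpha = xa - 1 - alpha) in Hray; last first.
  by rewrite /xa /xi; ring.
apply: (Rmult_le_reg_l D) => //; lra.
Qed.

End NewtonStep.

Lemma step_bounds_of_Rmin alpha de : 0 < de -> 0 <= alpha <= / 6 * Rmin 1 (/ de) ->
  alpha <= / 6 /\ alpha * de <= / 6.
Proof.
move=> Hde Hal; have := Rmin_l 1 (/ de); have := Rmin_r 1 (/ de) => H1 H2.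
split; first lra.
have := Rmult_le_compat_r de alpha (/ 6 * / de) (Rlt_le _ _ Hde) ltac:(lra).
by rewrite Rmult_assoc Rinv_l; lra.
Qed.

Theorem mainTheorem19
  (n m : nat) (K : vec n -> Prop) (nu : R)
  (F : vec n -> R) (gF : vec n -> vec n) (HF : vec n -> mat n n)
  (TF : vec n -> 'I_n -> 'I_n -> 'I_n -> R)
  (Fs : vec n -> R) (gFs : vec n -> vec n) (HFs : vec n -> mat n n)
  (TFs : vec n -> 'I_n -> 'I_n -> 'I_n -> R)
  (A : mat m n) (b : vec m) (c : vec n)
  (gf : vec m -> vec m) (Hf : vec m -> mat m m)
  (HK : regular_cone K)
  (HFbar : normal_barrier K nu F gF HF TF)
  (HFsdual : is_dual_barrier K F Fs)
  (HFsbar : normal_barrier (dual_cone K) nu Fs gFs HFs TFs)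
  (HAsurj : forall w : vec m, exists x : vec n, mv A x = w)
  (Hpfeas : exists x : vec n, vinterior K x /\ mv A x = b)
  (Hdfeas : exists (y : vec m) (s : vec n),
      vinterior (dual_cone K) s /\ vadd s (mtv A y) = c)
  (* f(y) = Fs(s(y)), s(y) = c - A^* y, with gradient gf and Hessian Hf on int Q *)
  (Hgf : has_grad (vinterior (fun y => dual_cone K (vsub c (mtv A y))))
           (fun y => Fs (vsub c (mtv A y))) gf)
  (HHf : forall i, has_grad (vinterior (fun y => dual_cone K (vsub c (mtv A y))))
           (fun y => gf y i) (fun y j => Hf y i j))
  (Hneg : negative_curvature K TFs)
  (mu beta : R) (y : vec m) (abar : R)
  (Hmu : 0 < mu) (Hbeta : beta <= / 25)
  (Hy : vinterior (fun y => dual_cone K (vsub c (mtv A y))) y /\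
        dnorm (Hf y) (vsub (gf y) (vscale (/ mu) b)) <= beta)
  (Habar : is_lub (fun a => 0 <= a /\
             dual_cone K (vsub c (mtv A (vadd y (vscale a (solve (Hf y) (gf y))))))) abar) :
  forall alpha : R,
    0 <= alpha <= / 6 * Rmin 1 (/ lnorm (Hf y) (solve (Hf y) (gf y))) ->
    (1 + alpha * sigmaK K (vsub c (mtv A y)) (vopp (mtv A (solve (Hf y) (gf y))))) *
      dnorm (Hf y) (vsub (gf (vadd y (vscale alpha (solve (Hf y) (gf y)))))
                         (vscale (xi abar alpha / mu) b))
    <= / 6.
Proof.
move=> alpha Halpha; have [HyQ Hbeta_y] := Hy; case: Hdfeas => ys [ss [Hss Hc]].
have [_ [_ [_ [_ Hsolid]]]] := HK.
have Hs := vinterior_slack Hss Hc HyQ.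
rewrite (_ : (fun a => _) = (fun a => 0 <= a /\ dual_cone K (vadd (vsub c (mtv A y))
    (vscale a (vopp (mtv A (solve (Hf y) (gf y)))))))) in Habar; last first.
  by apply: functional_extensionality => a; rewrite slack_line.
rewrite (lnorm_newton HFsbar Hss Hc Hgf HHf HyQ) in Halpha.
have Hde := local_norm_pos HFsbar Hs Habar.
have [Hal6 Halde] := step_bounds_of_Rmin Hde Halpha.
have [Hsi0 _] := sigmaK_spec HFsbar (vopp (mtv A (solve (Hf y) (gf y)))) Hs.
apply: (newton_step_arith (ab := abar) (be := beta) Hde (proj1 Halpha) Hal6 Halde Hsi0).
- exact: (sigmaK_le_local_norm HFsbar _ Hs).
- exact: (max_step_ge HFsbar Hs Habar).
- exact: Rle_trans (sqrt_pos _) Hbeta_y.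
- exact: Hbeta.
- exact: (newton_residual_bound HFsbar Hsolid HAsurj Hss Hc Hgf HHf HyQ Hneg Habar Hbeta_y
           (proj1 Halpha) Halde).
Qed.
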